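(* Let $X$ be a space with property A, $E$ a Banach space, $p\in(1,\infty)$ and $q$ its conjugate index. For each $n\in\mathbb{N}$ let $\{\phi_i^{(n)}\}_{i\in I_n}$ be a metric $p$-partition of unity on $X$ with $(n,1/n)$-variation, and define $M_n:\mathcal{A}^p_E(X)\to\mathcal{A}^p_E(X)$ by $M_n(A)=\sum_{i\in I_n}(\phi_i^{(n)})^{p/q}A\phi_i^{(n)}$ (strongly convergent sum). Then each $M_n$ is a well-defined linear map of norm one, and $M_n(A)\to A$ in norm as $n\to\infty$ for every $A\in\mathcal{A}^p_E(X)$.
   Context: A *space* is a metric space $(X,d)$ that is strongly discrete (the set $\{d(x,y):x,y\in X\}$ is a discrete subset of $\mathbb{R}$) and has bounded geometry (for every $r>0$, $\sup_{x\in X}|B(x;r)|<\infty$). $\ell^p_E(X)$ is the Banach space of $p$-summable functions $X\to E$; a bounded function $\phi:X\to\mathbb{C}$ acts by pointwise multiplication. A bounded operator $A$ has matrix entries $A_{xy}\in\mathcal{L}(E)$, $A_{xy}e=(A(\delta_ye))(x)$; a band operator is an $X\times X$ matrix with uniformly bounded entries and finite propagation $\sup\{d(x,y):A_{xy}\ne0\}$, acting by matrix multiplication; $\mathcal{A}^p_E(X)$ is the norm closure of the band operators in $\mathcal{L}(\ell^p_E(X))$. A metric $p$-partition of unity on $X$ is a family $\{\phi_i:X\to[0,1]\}_{i\in I}$ such that (i) there is $N$ with at most $N$ of the $\phi_i(x)$ nonzero for each $x$; (ii) $\sup_i\operatorname{diam}\{x:\phi_i(x)\ne0\}<\infty$;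 (iii) $\sum_i\phi_i(x)^p=1$ for all $x$. It has $(r,\epsilon)$-variation if $d(x,y)\le r$ implies $\sum_i|\phi_i(x)-\phi_i(y)|^p<\epsilon^p$. $X$ has property A if for all $r,\epsilon>0$ there is a metric $p$-partition of unity with $(r,\epsilon)$-variation (independent of $p\in[1,\infty)$). *)

From Stdlib Require Import Reals List ClassicalEpsilon.
Import ListNotations.
Open Scope R_scope.
Set Implicit Arguments.

(** * Real powers with the convention 0^a = 0 (for a > 0 this is the usual value). *)
Definition rpow (a b : R) : R := if Rle_dec a 0 then 0 else Rpower a b.

Definition Rsup (S : R -> Prop) : R :=
  epsilon (inhabits 0) (fun m => is_lub S m).

Definition lsum {T : Type} (L : list T) (g : T -> R) : R :=
  fold_right (fun x acc => g x + acc) 0 L.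

Record Banach := {
  bcar :> Type;
  bzero : bcar;
  badd : bcar -> bcar -> bcar;
  bopp : bcar -> bcar;
  bscal : R -> bcar -> bcar;
  bnorm : bcar -> R;
  badd_assoc : forall x y z, badd x (badd y z) = badd (badd x y) z;
  badd_comm : forall x y, badd x y = badd y x;
  badd_0 : forall x, badd bzero x = x;
  badd_opp : forall x, badd x (bopp x) = bzero;
  bscal_1 : forall x, bscal 1 x = x;
  bscal_assoc : forall a b x, bscal a (bscal b x) = bscal (a * b) x;
  bscal_distr_l : forall a x y, bscal a (badd x y) = badd (bscal a x) (bscal a y);
  bscal_distr_r : forall a b x, bscal (a + b) x = badd (bscal a x) (bscal b x);
  bnorm_nonneg : forall x, 0 <= bnorm x;
  bnorm_eq0 : forall x, bnorm x = 0 -> x = bzero;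
  bnorm_scal : forall a x, bnorm (bscal a x) = Rabs a * bnorm x;
  bnorm_triangle : forall x y, bnorm (badd x y) <= bnorm x + bnorm y;
  bcomplete : forall u : nat -> bcar,
    (forall eps, 0 < eps -> exists N, forall m n, (N <= m)%nat -> (N <= n)%nat ->
        bnorm (badd (u m) (bopp (u n))) < eps) ->
    exists l, forall eps, 0 < eps -> exists N, forall n, (N <= n)%nat ->
        bnorm (badd (u n) (bopp l)) < eps
}.

Record MetricSpace := {
  mcar :> Type;
  dist : mcar -> mcar -> R;
  dist_nonneg : forall x y, 0 <= dist x y;
  dist_eq0 : forall x y, dist x y = 0 <-> x = y;
  dist_sym : forall x y, dist x y = dist y x;
  dist_triangle : forall x y z, dist x z <= dist x y + dist y z
}.

Definition strongly_discrete (X : MetricSpace) : Prop :=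
  forall t, (exists x y : X, t = dist X x y) ->
    exists delta, 0 < delta /\
      forall x y : X, dist X x y <> t -> delta <= Rabs (dist X x y - t).

Definition bounded_geometry (X : MetricSpace) : Prop :=
  forall r, 0 < r -> exists K : nat, forall x : X,
    exists L : list X, (length L <= K)%nat /\
      forall y : X, dist X x y <= r -> In y L.

Definition is_space (X : MetricSpace) : Prop :=
  strongly_discrete X /\ bounded_geometry X.

Definition metric_p_partition (X : MetricSpace) (p : R) (I : Type)
    (phi : I -> X -> R) : Prop :=
  (forall i x, 0 <= phi i x <= 1) /\
  (exists N : nat, forall x (L : list I), NoDup L ->
      (forall i, In i L -> phi i x <> 0) -> (length L <= N)%nat) /\
  (exists D, forall i x y, phi i x <> 0 -> phi i y <> 0 -> dist X x y <= D) /\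
  (forall x, exists L : list I, NoDup L /\
      (forall i, phi i x <> 0 -> In i L) /\
      lsum L (fun i => rpow (phi i x) p) = 1).

(** (r,eps)-variation: d(x,y) <= r implies sum_i |phi_i(x)-phi_i(y)|^p < eps^p
    (the sum is finite; it is computed over any duplicate-free list covering the
    indices where phi_i(x) or phi_i(y) is nonzero). *)
Definition has_variation (X : MetricSpace) (p : R) (I : Type)
    (phi : I -> X -> R) (r eps : R) : Prop :=
  forall x y : X, dist X x y <= r ->
    exists L : list I, NoDup L /\
      (forall i, phi i x <> 0 \/ phi i y <> 0 -> In i L) /\
      lsum L (fun i => rpow (Rabs (phi i x - phi i y)) p) < rpow eps p.

Definition property_A (X : MetricSpace) (p : R) : Prop :=
  forall r eps, 0 < r -> 0 < eps ->
    exists (I : Type) (phi : I -> X -> R),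
      metric_p_partition X p phi /\ has_variation X p phi r eps.

Section Lp.
Variables (X : MetricSpace) (E : Banach) (p : R).

Definition fadd (f g : X -> E) : X -> E := fun x => badd E (f x) (g x).
Definition fscal (a : R) (f : X -> E) : X -> E := fun x => bscal E a (f x).
Definition fsub (f g : X -> E) : X -> E := fun x => badd E (f x) (bopp E (g x)).
Definition fmul (phi : X -> R) (f : X -> E) : X -> E := fun x => bscal E (phi x) (f x).

Definition psums (f : X -> E) : R -> Prop :=
  fun s => exists L : list X, NoDup L /\ s = lsum L (fun x => rpow (bnorm E (f x)) p).

Definition is_lp (f : X -> E) : Prop :=
  exists M, forall s, psums f s -> s <= M.

Definition lp_norm (f : X -> E) : R := rpow (Rsup (psums f)) (/ p).

Definition Op := (X -> E) -> (X -> E).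

Definition oadd (A B : Op) : Op := fun f => fadd (A f) (B f).
Definition oscal (a : R) (A : Op) : Op := fun f => fscal a (A f).
Definition osub (A B : Op) : Op := fun f => fsub (A f) (B f).

(** Bounded linear operator on l^p_E(X) (only its action on l^p matters). *)
Definition bounded_op (A : Op) : Prop :=
  (forall f, is_lp f -> is_lp (A f)) /\
  (forall f g a, is_lp f -> is_lp g ->
      forall x, A (fadd f (fscal a g)) x = badd E (A f x) (bscal E a (A g x))) /\
  (exists C, forall f, is_lp f -> lp_norm (A f) <= C * lp_norm f).

Definition opnorm (A : Op) : R :=
  Rsup (fun s => exists f, is_lp f /\ lp_norm f <= 1 /\ s = lp_norm (A f)).

Definition delta (y : X) (e : E) : X -> E :=
  fun x => if excluded_middle_informative (x = y) then e else bzero E.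

Definition entry (A : Op) (x y : X) (e : E) : E := A (delta y e) x.

(** Band operator: bounded operator whose matrix has finite propagation
    (for a bounded operator on l^p, p < oo, the matrix entries are uniformly
    bounded and the operator acts by matrix multiplication). *)
Definition is_band (A : Op) : Prop :=
  bounded_op A /\
  exists R0, forall x y e, R0 < dist X x y -> entry A x y e = bzero E.

Definition in_Ap (A : Op) : Prop :=
  bounded_op A /\
  forall eps, 0 < eps -> exists B, is_band B /\ opnorm (osub A B) < eps.

Definition partial_M (q : R) (I : Type) (phi : I -> X -> R) (A : Op)
    (L : list I) : Op :=
  fun f => fold_right (fun i acc => fadd (fmul (fun x => rpow (phi i x) (p / q))
                                               (A (fmul (phi i) f))) acc)
                      (fun _ => bzero E) L.

Definition strong_sum (q : R) (I : Type) (phi : I -> X -> R) (A M : Op) : Prop :=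
  forall f, is_lp f ->
    forall eps, 0 < eps -> exists L0 : list I, NoDup L0 /\
      forall L : list I, NoDup L -> incl L0 L ->
        lp_norm (fsub (partial_M q phi A L f) (M f)) < eps.

End Lp.

(** The multiplier [M(A) = sum_i phi_i^(p/q) A phi_i] is controlled pointwise by the
    weighted Hoelder inequality [(sum_i w_i^(p-1) a_i)^p <= sum_i a_i^p], valid whenever
    [sum_i w_i^p <= 1]: applied with [a_i = |A(phi_i f)(x)|] and summed over [x], it shows
    that [M] does not increase the operator norm, while [M(1) = 1] because
    [phi_i^(p-1) phi_i = phi_i^p] sums to one.  For a band operator [B] of propagation
    [R0], [(M(B) - B) f (x)] expands as a sum over the (at most [K]) points [y] of the
    [R0]-ball around [x] of [c(x,y) B(delta_y f(y))(x)], with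
    [c(x,y) = sum_i phi_i(x)^(p-1) (phi_i(y) - phi_i(x))]; Hoelder and the
    [(n,1/n)]-variation give [|c(x,y)| <= 1/n], hence [||M_n(B) - B|| <= K^2 ||B|| / n].
    Approximating [A] by band operators then gives [M_n(A) -> A]. *)
From Pilot Require Import Defs.
From Stdlib Require Import Reals List ClassicalEpsilon Lra Lia Permutation FunctionalExtensionality.
Import ListNotations.
Open Scope R_scope.

Definition dec (P : Prop) : bool := if excluded_middle_informative P then true else false.

Lemma dec_true (P : Prop) : P -> dec P = true.
Proof. unfold dec; destruct (excluded_middle_informative P); tauto. Qed.

Lemma dec_false (P : Prop) : ~ P -> dec P = false.
Proof. unfold dec; destruct (excluded_middle_informative P); tauto. Qed.

Lemma dec_true_inv (P : Prop) : dec P = true -> P.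
Proof. unfold dec; destruct (excluded_middle_informative P); auto; discriminate. Qed.

Definition classic_eq_dec {T : Type} : forall x y : T, {x = y} + {x <> y} :=
  fun x y => excluded_middle_informative (x = y).

Lemma incl_nodup_app_l {T} (L1 L2 : list T) : incl L1 (nodup classic_eq_dec (L1 ++ L2)).
Proof. intros x Hx. apply nodup_In. apply in_or_app; auto. Qed.

Lemma incl_nodup_app_r {T} (L1 L2 : list T) : incl L2 (nodup classic_eq_dec (L1 ++ L2)).
Proof. intros x Hx. apply nodup_In. apply in_or_app; auto. Qed.

Section CommutativeSum.
Variables (V : Type) (add : V -> V -> V) (z : V).
Hypothesis add_assoc : forall x y w, add x (add y w) = add (add x y) w.
Hypothesis add_comm : forall x y, add x y = add y x.
Hypothesis add_z : forall x, add z x = x.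

Definition gsum {T : Type} (L : list T) (g : T -> V) : V :=
  fold_right (fun i acc => add (g i) acc) z L.

Lemma gsum_perm {T} (L1 L2 : list T) g : Permutation L1 L2 -> gsum L1 g = gsum L2 g.
Proof.
  induction 1; simpl; auto.
  - now rewrite IHPermutation.
  - rewrite !add_assoc. now rewrite (add_comm (g y)).
  - congruence.
Qed.

Lemma gsum_ext_in {T} (L : list T) g1 g2 : (forall i, In i L -> g1 i = g2 i) ->
  gsum L g1 = gsum L g2.
Proof. induction L; simpl; intros H; auto. rewrite H by auto. rewrite IHL; auto. Qed.

Lemma gsum_eq_zero {T} (L : list T) g : (forall i, In i L -> g i = z) -> gsum L g = z.
Proof. induction L; simpl; intros H; auto. rewrite H by auto. rewrite IHL; auto. Qed.

Lemma gsum_add {T} (L : list T) f g :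
  gsum L (fun i => add (f i) (g i)) = add (gsum L f) (gsum L g).
Proof.
  induction L; simpl. now rewrite add_z. rewrite IHL.
  rewrite !add_assoc. f_equal. rewrite <- !add_assoc. f_equal. apply add_comm.
Qed.

Definition nonzero {T} (g : T -> V) : T -> bool := fun i => negb (dec (g i = z)).

Lemma gsum_filter_nonzero {T} (L : list T) g : gsum L g = gsum (filter (nonzero g) L) g.
Proof.
  induction L; simpl; auto. unfold nonzero at 1.
  destruct (excluded_middle_informative (g a = z)) as [e|e].
  - rewrite dec_true by auto. simpl. rewrite e, add_z. auto.
  - rewrite dec_false by auto. simpl. now rewrite IHL.
Qed.

Lemma gsum_reindex {T} (L1 L2 : list T) g : NoDup L1 -> NoDup L2 ->
  (forall i, g i <> z -> (In i L1 <-> In i L2)) -> gsum L1 g = gsum L2 g.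
Proof.
  intros N1 N2 H. rewrite (gsum_filter_nonzero L1), (gsum_filter_nonzero L2).
  apply gsum_perm. apply NoDup_Permutation; try apply NoDup_filter; auto.
  intros i. rewrite !filter_In. unfold nonzero.
  destruct (excluded_middle_informative (g i = z)) as [e|e].
  - rewrite dec_true by auto. simpl. split; intros [_ h]; discriminate.
  - rewrite dec_false by auto. simpl. specialize (H i e). tauto.
Qed.

Lemma gsum_exchange {A B} (L1 : list A) (L2 : list B) (h : A -> B -> V) :
  gsum L1 (fun x => gsum L2 (fun i => h x i)) = gsum L2 (fun i => gsum L1 (fun x => h x i)).
Proof.
  induction L1; simpl.
  - symmetry. apply gsum_eq_zero. auto.
  - rewrite IHL1. symmetry. apply (gsum_add L2 (fun i => h a i)).
Qed.
End CommutativeSum.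

Arguments gsum {V} add z {T} L g.
Arguments nonzero {V} z {T} g _.

Lemma lsum_app {T} (L1 L2 : list T) g : lsum (L1 ++ L2) g = lsum L1 g + lsum L2 g.
Proof. induction L1; simpl. ring. rewrite IHL1; ring. Qed.

Lemma lsum_ext_in {T} (L : list T) g1 g2 : (forall i, In i L -> g1 i = g2 i) ->
  lsum L g1 = lsum L g2.
Proof. apply gsum_ext_in. Qed.

Lemma lsum_nonneg {T} (L : list T) g : (forall i, In i L -> 0 <= g i) -> 0 <= lsum L g.
Proof.
  induction L; simpl; intros H. lra.
  pose proof (H a (or_introl eq_refl)). pose proof (IHL (fun i h => H i (or_intror h))). lra.
Qed.

Lemma lsum_le {T} (L : list T) g1 g2 : (forall i, In i L -> g1 i <= g2 i) ->
  lsum L g1 <= lsum L g2.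
Proof.
  induction L; simpl; intros H. lra.
  pose proof (H a (or_introl eq_refl)). pose proof (IHL (fun i h => H i (or_intror h))). lra.
Qed.

Lemma lsum_plus {T} (L : list T) f g : lsum L (fun i => f i + g i) = lsum L f + lsum L g.
Proof. induction L; simpl. ring. rewrite IHL; ring. Qed.

Lemma lsum_mult_l {T} (L : list T) c g : lsum L (fun i => c * g i) = c * lsum L g.
Proof. induction L; simpl. ring. rewrite IHL; ring. Qed.

Lemma lsum_eq_zero {T} (L : list T) g : (forall i, In i L -> g i = 0) -> lsum L g = 0.
Proof. intros H; apply gsum_eq_zero; auto; intros; ring. Qed.

Lemma lsum_exchange {A B} (L1 : list A) (L2 : list B) (h : A -> B -> R) :
  lsum L1 (fun x => lsum L2 (fun i => h x i)) = lsum L2 (fun i => lsum L1 (fun x => h x i)).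
Proof. apply gsum_exchange; intros; ring. Qed.

Lemma lsum_abs {T} (L : list T) g : Rabs (lsum L g) <= lsum L (fun i => Rabs (g i)).
Proof. induction L; simpl. rewrite Rabs_R0; lra. eapply Rle_trans. apply Rabs_triang. lra. Qed.

Lemma lsum_le_elem {T} (L : list T) g x : (forall i, In i L -> 0 <= g i) -> In x L ->
  g x <= lsum L g.
Proof.
  induction L; simpl; intros H Hx. contradiction.
  destruct Hx as [<-|Hx].
  - pose proof (lsum_nonneg L g (fun i h => H i (or_intror h))). lra.
  - pose proof (H a (or_introl eq_refl)). pose proof (IHL (fun i h => H i (or_intror h)) Hx). lra.
Qed.

Lemma lsum_le_sublist {T} (K L : list T) g : NoDup K -> NoDup L -> incl K L ->
  (forall i, 0 <= g i) -> lsum K g <= lsum L g.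
Proof.
  revert L. induction K as [|a K IH]; intros L NK NL Hi Hg.
  - simpl. apply lsum_nonneg; auto.
  - assert (Ha : In a L) by (apply Hi; left; auto).
    destruct (in_split a L Ha) as [l1 [l2 ->]].
    rewrite lsum_app. simpl. inversion NK; subst.
    assert (HH : lsum K g <= lsum (l1 ++ l2) g).
    { apply IH; auto. eapply NoDup_remove_1; eauto.
      intros b Hb. assert (In b (l1 ++ a :: l2)) by (apply Hi; right; auto).
      apply in_app_or in H. apply in_or_app. destruct H as [H|[H|H]]; auto.
      subst; contradiction. }
    rewrite lsum_app in HH. lra.
Qed.

Lemma lsum_le_cover {T} (K L : list T) g : NoDup K -> NoDup L ->
  (forall i, In i K -> g i <> 0 -> In i L) ->
  (forall i, 0 <= g i) -> lsum K g <= lsum L g.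
Proof.
  intros NK NL H Hg. rewrite (gsum_filter_nonzero _ Rplus 0) by (intros; ring).
  apply lsum_le_sublist; auto. apply NoDup_filter; auto.
  intros i Hi. apply filter_In in Hi. destruct Hi as [Hi Hn].
  apply H; auto. unfold nonzero in Hn. intros e. rewrite dec_true in Hn by auto. discriminate.
Qed.

Lemma lsum_le_length {T} (L : list T) g m : (forall i, In i L -> g i <= m) ->
  lsum L g <= INR (length L) * m.
Proof.
  induction L; simpl; intros H. lra.
  pose proof (H a (or_introl eq_refl)). pose proof (IHL (fun i h => H i (or_intror h))).
  destruct (length L). simpl in *. lra. lra.
Qed.

Lemma lsum_filter_out {T : Type} (L : list T) (P : T -> Prop) (g : T -> R) :
  lsum L (fun x => if dec (P x) then 0 else g x) = lsum (filter (fun x => negb (dec (P x))) L) g.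
Proof. induction L; simpl; auto. destruct (dec (P a)); simpl; rewrite IHL; ring. Qed.

Lemma exists_small_factor c e : 0 <= c -> 0 < e -> exists d, 0 < d /\ c * d < e.
Proof.
  intros Hc He. exists (e / (c + 1)). assert (Hd : 0 < e / (c + 1)) by (apply Rdiv_lt_0_compat; lra).
  split; auto. replace (c * (e / (c + 1))) with (e - e / (c + 1)) by (field; lra). lra.
Qed.

Lemma rpow_pos a b : 0 < a -> rpow a b = Rpower a b.
Proof. intros. unfold rpow. destruct (Rle_dec a 0); [lra|auto]. Qed.

Lemma rpow_0 b : rpow 0 b = 0.
Proof. unfold rpow. destruct (Rle_dec 0 0); [auto|lra]. Qed.

Lemma rpow_nonneg a b : 0 <= rpow a b.
Proof. unfold rpow. destruct (Rle_dec a 0). lra. left; apply exp_pos. Qed.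

Lemma rpow_gt0 a b : 0 < a -> 0 < rpow a b.
Proof. intros. rewrite rpow_pos; auto. apply exp_pos. Qed.

Lemma rpow_1 a : 0 <= a -> rpow a 1 = a.
Proof. intros [H|H]. rewrite rpow_pos; auto. apply Rpower_1; auto. subst; apply rpow_0. Qed.

Lemma rpow_1l b : rpow 1 b = 1.
Proof. rewrite rpow_pos by lra. unfold Rpower. rewrite ln_1, Rmult_0_r. apply exp_0. Qed.

Lemma rpow_mult a b c : 0 <= a -> 0 <= b -> rpow (a * b) c = rpow a c * rpow b c.
Proof.
  intros [Ha|Ha] [Hb|Hb].
  - rewrite !rpow_pos; try nra. symmetry. apply Rpower_mult_distr; auto.
  - subst. rewrite Rmult_0_r, rpow_0. ring.
  - subst. rewrite Rmult_0_l, rpow_0. ring.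
  - subst. rewrite Rmult_0_l, rpow_0. ring.
Qed.

Lemma rpow_rpow a b c : 0 <= a -> rpow (rpow a b) c = rpow a (b * c).
Proof.
  intros [Ha|Ha].
  - rewrite (rpow_pos a b) by auto. rewrite rpow_pos by apply exp_pos.
    rewrite rpow_pos by auto. apply Rpower_mult.
  - subst. rewrite !rpow_0. reflexivity.
Qed.

Lemma rpow_rpow_inv a b : 0 <= a -> b <> 0 -> rpow (rpow a b) (/ b) = a.
Proof. intros Ha Hb. rewrite rpow_rpow, Rinv_r by auto. apply rpow_1; auto. Qed.

Lemma rpow_Rinv t c : 0 < t -> rpow (/ t) c = / rpow t c.
Proof.
  intros Ht. rewrite !rpow_pos; auto. 2: apply Rinv_0_lt_compat; auto.
  unfold Rpower. rewrite ln_Rinv by auto. rewrite <- exp_Ropp. f_equal. ring.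
Qed.

Lemma rpow_le a b c : 0 <= a <= b -> 0 <= c -> rpow a c <= rpow b c.
Proof.
  intros [[Ha|Ha] Hab] Hc.
  - rewrite !rpow_pos by lra. apply Rle_Rpower_l; lra.
  - subst. rewrite rpow_0. apply rpow_nonneg.
Qed.

Lemma rpow_lt a b c : 0 <= a < b -> 0 < c -> rpow a c < rpow b c.
Proof.
  intros [[Ha|Ha] Hab] Hc.
  - rewrite !rpow_pos by lra. apply Rlt_Rpower_l; lra.
  - subst. rewrite rpow_0. apply rpow_gt0; lra.
Qed.

Lemma rpow_le_inv a b c : 0 <= a -> 0 <= b -> 0 < c -> rpow a c <= rpow b c -> a <= b.
Proof.
  intros Ha Hb Hc H. destruct (Rle_lt_dec a b); auto.
  assert (rpow b c < rpow a c) by (apply rpow_lt; lra). lra.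
Qed.

Lemma rpow_lt_inv a b c : 0 <= a -> 0 <= b -> 0 < c -> rpow a c < rpow b c -> a < b.
Proof.
  intros Ha Hb Hc H. destruct (Rlt_le_dec a b); auto.
  assert (rpow b c <= rpow a c) by (apply rpow_le; lra). lra.
Qed.

Lemma rpow_eq0 a c : 0 <= a -> rpow a c = 0 -> a = 0.
Proof. intros [Ha|Ha] H; auto. pose proof (rpow_gt0 a c Ha). lra. Qed.

Lemma rpow_le1 a c : 0 <= a <= 1 -> 0 <= c -> rpow a c <= 1.
Proof. intros. rewrite <- (rpow_1l c). apply rpow_le; lra. Qed.

Lemma rpow_ge_self a c : 1 <= a -> 1 <= c -> a <= rpow a c.
Proof.
  intros Ha Hc. rewrite rpow_pos by lra. rewrite <- (Rpower_1 a) at 1 by lra.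
  apply Rle_Rpower; lra.
Qed.

Lemma rpow_pred a c : 0 <= a -> rpow a c = rpow a (c - 1) * a.
Proof.
  intros [Ha|Ha].
  - rewrite !rpow_pos by auto. rewrite <- (Rpower_1 a) at 3 by auto.
    rewrite <- Rpower_plus. f_equal. ring.
  - subst. rewrite !rpow_0. ring.
Qed.

Lemma rpow_bernoulli s p : 0 < s -> 1 <= p -> 1 + p * (s - 1) <= rpow s p.
Proof.
  intros Hs Hp. rewrite rpow_pred by lra. rewrite rpow_pos by auto.
  unfold Rpower. pose proof (exp_ineq1_le ((p - 1) * ln s)) as H1.
  pose proof (exp_ineq1_le (- ln s)) as H2. rewrite exp_Ropp, exp_ln in H2 by auto.
  assert (H3 : s * ln s >= s - 1).
  { assert (s * (1 + - ln s) <= s * / s) by (apply Rmult_le_compat_l; lra).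
    rewrite Rinv_r in H by lra. nra. }
  assert (exp ((p - 1) * ln s) * s >= (1 + (p - 1) * ln s) * s) by nra.
  nra.
Qed.

(** Tangent-line form of Bernoulli's inequality at [a = w m], the term-wise step of Hoelder. *)
Lemma holder_tangent (p m w a : R) : 1 < p -> 0 < m -> 0 <= w -> 0 <= a ->
  rpow w p * rpow m p + p * rpow m (p - 1) * (rpow w (p - 1) * a - rpow w p * m)
  <= rpow a p.
Proof.
  intros Hp Hm [Hw|Hw] [Ha|Ha].
  - assert (Hwm : 0 < w * m) by nra.
    assert (Hs : 0 < a / (w * m)) by (apply Rdiv_lt_0_compat; auto).
    pose proof (rpow_bernoulli (a / (w * m)) p Hs (Rlt_le _ _ Hp)) as B.
    assert (Hq : 0 < rpow (w * m) p) by (apply rpow_gt0; auto).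
    assert (B2 : (1 + p * (a / (w * m) - 1)) * rpow (w * m) p <= rpow a p).
    { replace (rpow a p) with (rpow (a / (w * m)) p * rpow (w * m) p).
      apply Rmult_le_compat_r; lra.
      rewrite <- rpow_mult by lra. f_equal. field. lra. }
    rewrite (rpow_mult w m) in B2 by lra.
    rewrite (rpow_pred w p) in * by lra. rewrite (rpow_pred m p) in * by lra.
    set (u := rpow w (p - 1)) in *. set (v := rpow m (p - 1)) in *.
    replace ((1 + p * (a / (w * m) - 1)) * (u * w * (v * m))) with
      (u * w * (v * m) + p * (u * v * a - u * w * (v * m))) in B2 by (field; lra).
    nra.
  - subst. rewrite rpow_0, (rpow_pred w p), (rpow_pred m p) by lra.
    assert (0 < rpow w (p - 1)) by (apply rpow_gt0; auto).
    assert (0 < rpow m (p - 1)) by (apply rpow_gt0; auto).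
    assert (0 < rpow w (p - 1) * w * (rpow m (p - 1) * m)) by
      (repeat apply Rmult_lt_0_compat; auto).
    nra.
  - subst. rewrite !rpow_0. pose proof (rpow_nonneg a p). nra.
  - subst. rewrite !rpow_0. nra.
Qed.

Lemma holder_weighted {T} (p : R) (K : list T) (w a : T -> R) : 1 < p ->
  (forall i, 0 <= w i) -> (forall i, 0 <= a i) ->
  lsum K (fun i => rpow (w i) p) <= 1 ->
  rpow (lsum K (fun i => rpow (w i) (p - 1) * a i)) p <= lsum K (fun i => rpow (a i) p).
Proof.
  intros Hp Hw Ha HW.
  set (m := lsum K (fun i => rpow (w i) (p - 1) * a i)).
  assert (Hm0 : 0 <= m).
  { apply lsum_nonneg. intros. pose proof (rpow_nonneg (w i) (p-1)). pose proof (Ha i). nra. }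
  destruct Hm0 as [Hm|Hm]; [|rewrite <- Hm, rpow_0; apply lsum_nonneg; intros; apply rpow_nonneg].
  assert (H := lsum_le K _ _ (fun i _ => holder_tangent p m (w i) (a i) Hp Hm (Hw i) (Ha i))).
  rewrite lsum_plus, lsum_mult_l in H.
  rewrite (lsum_ext_in K (fun i => rpow (w i) p * rpow m p)
    (fun i => rpow m p * rpow (w i) p)) in H by (intros; ring).
  rewrite (lsum_ext_in K (fun i => rpow (w i) (p - 1) * a i - rpow (w i) p * m)
     (fun i => rpow (w i) (p - 1) * a i + (- m) * rpow (w i) p)) in H by (intros; ring).
  rewrite lsum_mult_l, lsum_plus, lsum_mult_l in H. fold m in H.
  set (W := lsum K (fun i => rpow (w i) p)) in *.
  assert (HW0 : 0 <= W) by (apply lsum_nonneg; intros; apply rpow_nonneg).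
  rewrite (rpow_pred m p) in H |- * by lra.
  assert (0 < rpow m (p - 1)) by (apply rpow_gt0; auto).
  assert (0 <= rpow m (p - 1) * m * (p - 1) * (1 - W)) by (repeat apply Rmult_le_pos; nra).
  nra.
Qed.

Lemma exists_max_in {T} (L : list T) (a : T -> R) : L <> [] ->
  exists y, In y L /\ forall z, In z L -> a z <= a y.
Proof.
  induction L as [|b L IH]; intros H. contradiction.
  destruct L as [|b' L'].
  - exists b. split. left; auto. intros z [->|[]]. lra.
  - destruct IH as [y [Hy Hm]]. discriminate.
    destruct (Rle_dec (a b) (a y)).
    + exists y. split. right; auto. intros z [<-|Hz]; auto.
    + exists b. split. left; auto. intros z [<-|Hz]. lra. specialize (Hm z Hz). lra.
Qed.

Lemma rpow_lsum_le {T} (p : R) (L : list T) (a : T -> R) : 0 <= p ->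
  (forall y, In y L -> 0 <= a y) ->
  rpow (lsum L a) p <= rpow (INR (length L)) p * lsum L (fun y => rpow (a y) p).
Proof.
  intros Hp Ha. destruct L as [|b L'].
  - simpl. rewrite rpow_0. lra.
  - destruct (exists_max_in (b :: L') a) as [y [Hy Hm]]. discriminate.
    assert (H1 : lsum (b :: L') a <= INR (length (b :: L')) * a y) by (apply lsum_le_length; auto).
    assert (H0 : 0 <= lsum (b :: L') a) by (apply lsum_nonneg; auto).
    eapply Rle_trans. apply rpow_le; [split; [exact H0|exact H1]|lra].
    rewrite rpow_mult by (auto; apply pos_INR).
    apply Rmult_le_compat_l. apply rpow_nonneg.
    apply (lsum_le_elem _ (fun y => rpow (a y) p)); auto. intros; apply rpow_nonneg.
Qed.

Definition sums {T : Type} (g : T -> R) : R -> Prop :=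
  fun s => exists L : list T, NoDup L /\ s = lsum L g.
Definition sums_le {T : Type} (g : T -> R) (B : R) : Prop :=
  forall L : list T, NoDup L -> lsum L g <= B.
Definition sup_sums {T : Type} (g : T -> R) : R := Rsup (sums g).

Lemma Rsup_lub (A : R -> Prop) : (exists m, is_lub A m) -> is_lub A (Rsup A).
Proof. intros H. unfold Rsup. apply epsilon_spec. exact H. Qed.

Lemma Rsup_eq (A : R -> Prop) m : is_lub A m -> Rsup A = m.
Proof.
  intros H. destruct (Rsup_lub A) as [H2 H2']; [eauto|].
  destruct H as [H1 H1']. apply Rle_antisym; auto.
Qed.

Lemma Rsup_lub_bounded (A : R -> Prop) : bound A -> (exists x, A x) -> is_lub A (Rsup A).
Proof. intros H1 H2. apply Rsup_lub. destruct (completeness A H1 H2) as [m Hm]; eauto. Qed.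

Lemma sup_sums_lub {T} (g : T -> R) B : sums_le g B -> is_lub (sums g) (sup_sums g).
Proof.
  intros H. apply Rsup_lub_bounded.
  - exists B. intros s [L [HL ->]]. auto.
  - exists 0, []. split. constructor. reflexivity.
Qed.

Lemma sup_sums_ge {T} (g : T -> R) B L : sums_le g B -> NoDup L -> lsum L g <= sup_sums g.
Proof. intros H HL. destruct (sup_sums_lub g B H) as [H1 _]. apply H1. exists L; auto. Qed.

Lemma sup_sums_le {T} (g : T -> R) B : sums_le g B -> sup_sums g <= B.
Proof.
  intros H. destruct (sup_sums_lub g B H) as [_ H2]. apply H2. intros s [L [HL ->]]; auto.
Qed.

Lemma sup_sums_nonneg {T} (g : T -> R) B : sums_le g B -> 0 <= sup_sums g.
Proof. intros H. apply (sup_sums_ge g B []) in H. simpl in H. auto. constructor. Qed.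

Lemma sums_le_sup {T} (g : T -> R) B : sums_le g B -> sums_le g (sup_sums g).
Proof. intros H L HL. eapply sup_sums_ge; eauto. Qed.

Lemma sums_le_pointwise {T} (g h : T -> R) B :
  (forall x, g x <= h x) -> sums_le h B -> sums_le g B.
Proof. intros H1 H2 L HL. specialize (H2 L HL). pose proof (lsum_le L _ _ (fun x _ => H1 x)). lra. Qed.

Lemma sums_le_scal {T} (h : T -> R) k B : 0 <= k -> sums_le h B -> sums_le (fun x => k * h x) (k * B).
Proof. intros Hk H L HL. rewrite lsum_mult_l. apply Rmult_le_compat_l; auto. Qed.

Lemma sup_sums_scal {T} (h : T -> R) k B : 0 <= k -> sums_le h B ->
  sup_sums (fun x => k * h x) = k * sup_sums h.
Proof.
  intros Hk HB. apply Rsup_eq. split.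
  - intros s [L [HL ->]]. rewrite lsum_mult_l. apply Rmult_le_compat_l; auto.
    eapply sup_sums_ge; eauto.
  - intros b Hb. destruct Hk as [Hk|Hk].
    + assert (sup_sums h <= b / k).
      { apply (sup_sums_le h). intros L HL. assert (k * lsum L h <= b).
        { rewrite <- lsum_mult_l. apply Hb. exists L; auto. }
        apply (Rmult_le_reg_l k); auto. replace (k * (b / k)) with b by (field; lra). lra. }
      assert (k * sup_sums h <= k * (b / k)) by (apply Rmult_le_compat_l; lra).
      replace (k * (b / k)) with b in H0 by (field; lra). lra.
    + subst. rewrite Rmult_0_l. apply Hb. exists []. split. constructor. simpl. ring.
Qed.

Lemma sums_tail {T} (g : T -> R) B eps : sums_le g B -> 0 < eps ->
  exists F : list T, NoDup F /\
    forall L, NoDup L -> (forall y, In y L -> ~ In y F) -> lsum L g <= eps.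
Proof.
  intros Hb He.
  assert (exists F, NoDup F /\ sup_sums g - eps < lsum F g) as [F [HF HF2]].
  { apply NNPP. intros Hn.
    assert (sup_sums g <= sup_sums g - eps); [|lra].
    apply (sup_sums_le g). intros L HL.
    destruct (Rle_lt_dec (lsum L g) (sup_sums g - eps)); auto.
    exfalso; apply Hn; eauto. }
  exists F; split; auto. intros L HL Hd.
  assert (HN : NoDup (F ++ L)).
  { apply NoDup_app; auto. intros x Hx Hx'. eapply Hd; eauto. }
  pose proof (sup_sums_ge g B (F ++ L) Hb HN). rewrite lsum_app in H. lra.
Qed.

Lemma sup_sums_superadditive {T J} (JL : list J) (g : J -> T -> R) H :
  (forall j x, 0 <= g j x) -> (forall j, exists B, sums_le (g j) B) ->
  (forall XL, NoDup XL -> lsum XL (fun x => lsum JL (fun j => g j x)) <= H) ->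
  lsum JL (fun j => sup_sums (g j)) <= H.
Proof.
  revert H. induction JL as [|j JL IH]; intros H Hg Hb Hs.
  - simpl. specialize (Hs [] (NoDup_nil _)). simpl in Hs. auto.
  - simpl.
    assert (Hc : forall XL1, NoDup XL1 ->
      lsum JL (fun j => sup_sums (g j)) <= H - lsum XL1 (g j)).
    { intros XL1 H1. apply IH; auto. intros XL2 H2.
      set (XL := nodup classic_eq_dec (XL1 ++ XL2)).
      assert (NX : NoDup XL) by apply NoDup_nodup.
      specialize (Hs XL NX). simpl in Hs. rewrite lsum_plus in Hs.
      assert (lsum XL1 (g j) <= lsum XL (g j)).
      { apply lsum_le_sublist; auto. apply incl_nodup_app_l. }
      assert (lsum XL2 (fun x => lsum JL (fun j => g j x)) <=
              lsum XL (fun x => lsum JL (fun j => g j x))).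
      { apply lsum_le_sublist; auto. apply incl_nodup_app_r. intros; apply lsum_nonneg; auto. }
      lra. }
    destruct (Hb j) as [B HB].
    assert (sup_sums (g j) <= H - lsum JL (fun j => sup_sums (g j))).
    { apply (sup_sums_le (g j)). intros L HL. specialize (Hc L HL). lra. }
    lra.
Qed.

Notation bsum E := (gsum (badd E) (bzero E)).

Section BanachAlgebra.
Variable E : Banach.
Notation "0E" := (bzero E).
Notation "a +E b" := (badd E a b) (at level 50, left associativity).
Notation "-E a" := (bopp E a) (at level 35).
Notation "c *E a" := (bscal E c a) (at level 40).
Notation nrm := (bnorm E).

Lemma badd_0r (x : E) : x +E 0E = x.
Proof. rewrite badd_comm. apply badd_0. Qed.

Lemma badd_cancel (a b : E) : a +E b = a -> b = 0E.
Proof.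
  intros H. transitivity ((-E a) +E (a +E b)).
  - rewrite badd_assoc, (badd_comm E (-E a) a), badd_opp, badd_0; auto.
  - rewrite H, badd_comm, badd_opp; auto.
Qed.

Lemma bscal_0l (x : E) : 0 *E x = 0E.
Proof. apply (badd_cancel (0 *E x)). rewrite <- bscal_distr_r. f_equal. ring. Qed.

Lemma bscal_0r (a : R) : a *E 0E = 0E.
Proof. apply (badd_cancel (a *E 0E)). rewrite <- bscal_distr_l. f_equal. apply badd_0. Qed.

Lemma bopp_scal (x : E) : -E x = (-1) *E x.
Proof.
  assert (H : x +E ((-1) *E x) = 0E).
  { rewrite <- (bscal_1 E x) at 1. rewrite <- bscal_distr_r.
    replace (1 + -1) with 0 by ring. apply bscal_0l. }
  transitivity ((-E x) +E (x +E ((-1) *E x))).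
  - rewrite H; symmetry; apply badd_0r.
  - rewrite badd_assoc, (badd_comm E (-E x) x), badd_opp, badd_0; auto.
Qed.

Lemma bnorm_0 : nrm 0E = 0.
Proof. rewrite <- (bscal_0l 0E), bnorm_scal, Rabs_R0. ring. Qed.

Lemma bnorm_opp (x : E) : nrm (-E x) = nrm x.
Proof. rewrite bopp_scal, bnorm_scal, Rabs_left by lra. ring. Qed.

Lemma bsub_add (a b : E) : (a +E -E b) +E b = a.
Proof. rewrite <- badd_assoc, (badd_comm E (-E b)), badd_opp. apply badd_0r. Qed.

Lemma bsub_add_r (a b : E) : a +E -E (a +E b) = -E b.
Proof.
  rewrite !bopp_scal, bscal_distr_l, badd_assoc, <- bopp_scal, badd_opp, badd_0. auto.
Qed.

Lemma bsub_add_add (a b c d : E) : (a +E b) +E -E (c +E d) = (a +E -E c) +E (b +E -E d).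
Proof.
  rewrite !bopp_scal, bscal_distr_l.
  rewrite !badd_assoc. f_equal. rewrite <- !badd_assoc. f_equal. apply badd_comm.
Qed.

Lemma bscal_add_scal (r a : R) (u v : E) : r *E (u +E a *E v) = r *E u +E a *E (r *E v).
Proof. rewrite bscal_distr_l, !bscal_assoc, Rmult_comm. auto. Qed.

Lemma bnorm_bsum {T} (L : list T) (g : T -> E) :
  nrm (bsum E L g) <= lsum L (fun i => nrm (g i)).
Proof.
  induction L; simpl. rewrite bnorm_0; lra.
  pose proof (bnorm_triangle E (g a) (bsum E L g)). lra.
Qed.

Lemma bscal_bsum {T} (L : list T) (g : T -> E) c :
  c *E (bsum E L g) = bsum E L (fun i => c *E (g i)).
Proof. induction L; simpl. apply bscal_0r. rewrite bscal_distr_l. now rewrite IHL. Qed.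

Lemma lsum_bscal {T} (L : list T) (c : T -> R) (v : E) :
  (lsum L c) *E v = bsum E L (fun i => (c i) *E v).
Proof. induction L; simpl. apply bscal_0l. rewrite bscal_distr_r. now rewrite IHL. Qed.

Lemma bsum_add {T} (L : list T) (f g : T -> E) :
  bsum E L (fun i => f i +E g i) = bsum E L f +E bsum E L g.
Proof. apply gsum_add; auto using badd_assoc, badd_comm, badd_0. Qed.

Lemma bsum_reindex {T} (L1 L2 : list T) (g : T -> E) : NoDup L1 -> NoDup L2 ->
  (forall i, g i <> 0E -> (In i L1 <-> In i L2)) -> bsum E L1 g = bsum E L2 g.
Proof. apply gsum_reindex; auto using badd_assoc, badd_comm, badd_0. Qed.

Lemma bsum_eq_zero {T} (L : list T) (g : T -> E) : (forall i, In i L -> g i = 0E) ->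
  bsum E L g = 0E.
Proof. apply gsum_eq_zero; intros; apply badd_0. Qed.

Lemma bsum_exchange {A B} (L1 : list A) (L2 : list B) (h : A -> B -> E) :
  bsum E L1 (fun x => bsum E L2 (fun i => h x i)) = bsum E L2 (fun i => bsum E L1 (fun x => h x i)).
Proof. apply gsum_exchange; auto using badd_assoc, badd_comm, badd_0. Qed.

End BanachAlgebra.

Section LpSpace.
Variables (X : MetricSpace) (E : Banach) (p : R).
Hypothesis hp : 1 < p.
Notation "0E" := (bzero E).
Notation "a +E b" := (badd E a b) (at level 50, left associativity).
Notation "c *E a" := (bscal E c a) (at level 40).
Notation nrm := (bnorm E).
Notation is_lp := (is_lp X E p).
Notation lp_norm := (lp_norm X E p).

Definition npow (f : X -> E) : X -> R := fun x => rpow (nrm (f x)) p.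
Definition fzero : X -> E := fun _ => 0E.

Lemma npow_nonneg f x : 0 <= npow f x.
Proof. apply rpow_nonneg. Qed.

Lemma is_lp_sums_le f : is_lp f <-> exists B, sums_le (npow f) B.
Proof.
  split.
  - intros [M HM]. exists M. intros L HL. apply HM. exists L; auto.
  - intros [B HB]. exists B. intros s [L [HL ->]]. apply HB; auto.
Qed.

Lemma lp_norm_sup f : lp_norm f = rpow (sup_sums (npow f)) (/ p).
Proof. reflexivity. Qed.

Lemma lp_norm_nonneg f : 0 <= lp_norm f.
Proof. apply rpow_nonneg. Qed.

Lemma sums_le_fzero : sums_le (npow fzero) 0.
Proof.
  intros L _. rewrite lsum_eq_zero; [lra|]. intros x _.
  unfold npow, fzero. rewrite bnorm_0. apply rpow_0.
Qed.

Lemma lp_fzero : is_lp fzero.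
Proof. apply is_lp_sums_le. exists 0; apply sums_le_fzero. Qed.

Lemma lp_norm_fzero : lp_norm fzero = 0.
Proof.
  rewrite lp_norm_sup. replace (sup_sums (npow fzero)) with 0. apply rpow_0.
  apply Rle_antisym. apply (sup_sums_nonneg _ 0), sums_le_fzero. apply sup_sums_le, sums_le_fzero.
Qed.

Lemma npow_fscal a f x : npow (fscal X E a f) x = rpow (Rabs a) p * npow f x.
Proof.
  unfold npow, fscal. rewrite bnorm_scal. apply rpow_mult. apply Rabs_pos. apply bnorm_nonneg.
Qed.

Lemma lp_fscal a g : is_lp g -> is_lp (fscal X E a g).
Proof.
  intros Hg. apply is_lp_sums_le in Hg as [B HB]. apply is_lp_sums_le.
  exists (rpow (Rabs a) p * B). eapply sums_le_pointwise; [|apply sums_le_scal; eauto].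
  intros x. rewrite npow_fscal. lra. apply rpow_nonneg.
Qed.

Lemma lp_of_norm_le (g f : X -> E) : (forall y, nrm (g y) <= nrm (f y)) -> is_lp f -> is_lp g.
Proof.
  intros H Hf. apply is_lp_sums_le in Hf as [B HB]. apply is_lp_sums_le. exists B.
  eapply sums_le_pointwise; eauto. intros y. apply rpow_le. split; auto. apply bnorm_nonneg. lra.
Qed.

Lemma fzero_of_sup_sums_zero f B : sums_le (npow f) B -> sup_sums (npow f) = 0 -> f = fzero.
Proof.
  intros HB H0. extensionality x. unfold fzero.
  pose proof (sup_sums_ge (npow f) B [x] HB) as H. simpl in H. rewrite Rplus_0_r in H.
  assert (H2 : npow f x = 0).
  { pose proof (npow_nonneg f x). assert (NoDup [x]) by (repeat constructor; auto). specialize (H H2). lra. }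
  apply bnorm_eq0, (rpow_eq0 _ p); auto. apply bnorm_nonneg.
Qed.

Lemma sup_sums_le_of_lp_norm_le f B c : sums_le (npow f) B -> 0 <= c -> lp_norm f <= c ->
  sup_sums (npow f) <= rpow c p.
Proof.
  intros HB Hc H. rewrite lp_norm_sup in H.
  apply (rpow_le_inv _ _ (/ p)); [eapply sup_sums_nonneg; eauto|apply rpow_nonneg|
    apply Rinv_0_lt_compat; lra|].
  rewrite rpow_rpow_inv by lra. auto.
Qed.

(** [op_bound C c]: the inequality [||C g||_p <= c ||g||_p], stated with [p]-th powers. *)
Definition op_bound (C : Op X E) (c : R) : Prop :=
  forall g, is_lp g -> sums_le (npow (C g)) (rpow c p * sup_sums (npow g)).

Lemma op_bound_mono (C : Op X E) c c' : 0 <= c -> c <= c' -> op_bound C c -> op_bound C c'.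
Proof.
  intros Hc Hcc HC g Hg. pose proof Hg as [B HB]%is_lp_sums_le.
  eapply sums_le_pointwise; [intros; apply Rle_refl|].
  intros L HL. eapply Rle_trans; [apply HC; auto|].
  apply Rmult_le_compat_r; [eapply sup_sums_nonneg; eauto|]. apply rpow_le; lra.
Qed.

Definition opnorm_set (C : Op X E) : R -> Prop :=
  fun s => exists f, is_lp f /\ lp_norm f <= 1 /\ s = lp_norm (C f).

Lemma opnorm_set_fzero (C : Op X E) : opnorm_set C (lp_norm (C fzero)).
Proof. exists fzero. split. apply lp_fzero. rewrite lp_norm_fzero. split; auto; lra. Qed.

Lemma opnorm_le_of_bound (C : Op X E) c : 0 <= c -> op_bound C c -> opnorm p C <= c.
Proof.
  intros Hc HP.
  assert (Hub : forall s, opnorm_set C s -> s <= c).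
  { intros s [f [Hf [Hn ->]]]. apply is_lp_sums_le in Hf as [B HB].
    specialize (HP f (proj2 (is_lp_sums_le f) (ex_intro _ B HB))).
    assert (H1 : sup_sums (npow (C f)) <= rpow c p * sup_sums (npow f)) by (eapply sup_sums_le; eauto).
    assert (H2 : sup_sums (npow f) <= 1).
    { rewrite <- (rpow_1l p). eapply sup_sums_le_of_lp_norm_le; eauto; lra. }
    assert (H3 : 0 <= sup_sums (npow f)) by (eapply sup_sums_nonneg; eauto).
    pose proof (rpow_nonneg c p).
    rewrite lp_norm_sup, <- (rpow_rpow_inv c p) by lra.
    apply rpow_le; [split; [eapply sup_sums_nonneg; eauto|nra]|].
    left; apply Rinv_0_lt_compat; lra. }
  apply (Rsup_lub_bounded (opnorm_set C)); [exists c; auto|eexists; apply opnorm_set_fzero|auto].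
Qed.

Lemma linear_fzero (C : Op X E) : bounded_op p C -> C fzero = fzero.
Proof.
  intros [_ [Hl _]]. extensionality x. unfold fzero at 2.
  specialize (Hl fzero fzero 1 lp_fzero lp_fzero x).
  replace (fadd X E fzero (fscal X E 1 fzero)) with fzero in Hl
    by (extensionality y; unfold fadd, fscal, fzero; rewrite bscal_1, badd_0; auto).
  rewrite bscal_1 in Hl. symmetry in Hl. apply badd_cancel in Hl. auto.
Qed.

Lemma linear_fscal (C : Op X E) a g : bounded_op p C -> is_lp g ->
  C (fscal X E a g) = fscal X E a (C g).
Proof.
  intros HC Hg. pose proof (linear_fzero C HC) as Z. destruct HC as [_ [Hl _]].
  extensionality x. specialize (Hl fzero g a lp_fzero Hg x).
  replace (fadd X E fzero (fscal X E a g)) with (fscal X E a g) in Hl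
    by (extensionality y; unfold fadd, fscal, fzero; symmetry; apply badd_0).
  rewrite Hl, Z. unfold fzero, fscal. apply badd_0.
Qed.

Lemma opnorm_lub (C : Op X E) : bounded_op p C -> is_lub (opnorm_set C) (opnorm p C).
Proof.
  intros [_ [_ [C0 HC0]]]. apply Rsup_lub_bounded; [|eexists; apply opnorm_set_fzero].
  exists (Rmax C0 0). intros s [f [Hf [Hn ->]]].
  specialize (HC0 f Hf). pose proof (lp_norm_nonneg f).
  pose proof (Rmax_l C0 0). pose proof (Rmax_r C0 0). nra.
Qed.

Lemma opnorm_nonneg (C : Op X E) : bounded_op p C -> 0 <= opnorm p C.
Proof.
  intros HC. eapply Rle_trans; [apply (lp_norm_nonneg (C fzero))|].
  apply (opnorm_lub C HC), opnorm_set_fzero.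
Qed.

(** Normalize [g] to [h] with [sup_sums (npow h) = 1] and use [g = t h] for [t = ||g||_p]. *)
Lemma op_bound_opnorm (C : Op X E) : bounded_op p C -> op_bound C (opnorm p C).
Proof.
  intros HC g Hg. pose proof Hg as [B HB]%is_lp_sums_le.
  set (S := sup_sums (npow g)).
  assert (HS0 : 0 <= S) by (eapply sup_sums_nonneg; eauto).
  destruct HS0 as [HS|HS].
  2:{ rewrite (fzero_of_sup_sums_zero g B HB (eq_sym HS)), (linear_fzero C HC).
      rewrite <- HS, Rmult_0_r. apply sums_le_fzero. }
  set (t := rpow S (/ p)).
  assert (Ht : 0 < t) by (apply rpow_gt0; auto).
  assert (Htp : rpow t p = S).
  { unfold t. rewrite rpow_rpow, Rinv_l by lra. apply rpow_1; lra. }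
  set (h := fscal X E (/ t) g).
  assert (Hh : is_lp h) by (apply lp_fscal; auto).
  assert (Hgh : g = fscal X E t h).
  { extensionality x. unfold h, fscal. rewrite bscal_assoc, Rinv_r, bscal_1; auto; lra. }
  assert (HSh : sup_sums (npow h) = 1).
  { transitivity (/ S * S); [|field; lra]. unfold S at 2.
    rewrite <- (sup_sums_scal _ _ B) by (auto; left; apply Rinv_0_lt_compat; auto).
    unfold sup_sums. f_equal. extensionality s. unfold sums. f_equal. extensionality L.
    f_equal. f_equal. apply lsum_ext_in. intros x _.
    unfold h. rewrite npow_fscal, Rabs_right, rpow_Rinv, Htp by (auto; left; apply Rinv_0_lt_compat; auto).
    ring. }
  assert (HCh : lp_norm (C h) <= opnorm p C).
  { apply (opnorm_lub C HC). exists h. rewrite lp_norm_sup, HSh, rpow_1l. split; auto; lra. }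
  pose proof (proj1 HC h Hh) as [B' HB']%is_lp_sums_le.
  intros L HL. rewrite Hgh, (linear_fscal C t h HC Hh).
  rewrite (lsum_ext_in _ _ (fun x => S * npow (C h) x))
    by (intros; rewrite npow_fscal, Rabs_right, Htp; lra).
  rewrite lsum_mult_l, (Rmult_comm (rpow _ p)). apply Rmult_le_compat_l; [lra|].
  eapply Rle_trans; [eapply sup_sums_ge; eauto|].
  eapply sup_sums_le_of_lp_norm_le; eauto. apply opnorm_nonneg; auto.
Qed.

Lemma bounded_op_of_bound (C : Op X E) c : 0 <= c -> op_bound C c ->
  (forall f g a, is_lp f -> is_lp g ->
      forall x, C (fadd X E f (fscal X E a g)) x = C f x +E a *E C g x) ->
  bounded_op p C.
Proof.
  intros Hc HP Hl. split; [|split]; auto.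
  - intros f Hf. apply is_lp_sums_le. eexists. apply HP; auto.
  - exists c. intros f Hf. pose proof Hf as [B HB]%is_lp_sums_le.
    rewrite !lp_norm_sup.
    assert (0 <= sup_sums (npow f)) by (eapply sup_sums_nonneg; eauto).
    eapply Rle_trans. apply rpow_le.
    + split; [eapply sup_sums_nonneg, HP; auto|apply sup_sums_le, HP; auto].
    + left; apply Rinv_0_lt_compat; lra.
    + rewrite rpow_mult by (auto; apply rpow_nonneg). rewrite rpow_rpow_inv by lra. lra.
Qed.

(** One factor [n] comes from the convexity of [t^p], one from summing [n] terms. *)
Lemma op_bound_of_norm_le_sum (C : Op X E) (Cs : list (Op X E)) c : 0 <= c ->
  (forall D, In D Cs -> op_bound D c) ->
  (forall g x, is_lp g -> nrm (C g x) <= lsum Cs (fun D => nrm (D g x))) ->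
  op_bound C (INR (length Cs) * INR (length Cs) * c).
Proof.
  intros Hc HD Hpt g Hg L HL.
  assert (Hnp : INR (length Cs) <= rpow (INR (length Cs)) p).
  { destruct (length Cs) as [|k]; [simpl; apply rpow_nonneg|].
    apply rpow_ge_self; [rewrite S_INR; pose proof (pos_INR k)|]; lra. }
  set (n := INR (length Cs)) in *.
  assert (Hn : 0 <= n) by apply pos_INR.
  pose proof Hg as [Bg HBg]%is_lp_sums_le.
  assert (HS : 0 <= sup_sums (npow g)) by (eapply sup_sums_nonneg; eauto).
  apply Rle_trans with (lsum L (fun x => rpow n p * lsum Cs (fun D => npow (D g) x))).
  { apply lsum_le. intros x _. unfold npow at 1.
    eapply Rle_trans; [apply rpow_le; [split; [apply bnorm_nonneg|apply Hpt; auto]|lra]|].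
    apply rpow_lsum_le; [lra|]. intros; apply bnorm_nonneg. }
  rewrite lsum_mult_l, lsum_exchange.
  rewrite !rpow_mult by (auto; apply Rmult_le_pos; auto).
  assert (HcS : 0 <= rpow c p * sup_sums (npow g)) by (apply Rmult_le_pos; auto; apply rpow_nonneg).
  replace (rpow n p * rpow n p * rpow c p * sup_sums (npow g))
    with (rpow n p * (rpow n p * (rpow c p * sup_sums (npow g)))) by ring.
  apply Rmult_le_compat_l; [apply rpow_nonneg|].
  eapply Rle_trans; [|apply Rmult_le_compat_r; [exact HcS|exact Hnp]].
  unfold n. apply lsum_le_length. intros D HDin. apply HD; auto.
Qed.

Lemma bounded_osub (A B : Op X E) : bounded_op p A -> bounded_op p B -> bounded_op p (osub A B).
Proof.
  intros HA HB. set (m := Rmax (opnorm p A) (opnorm p B)).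
  assert (Hm : 0 <= m) by (eapply Rle_trans; [apply (opnorm_nonneg A HA)|apply Rmax_l]).
  apply (bounded_op_of_bound _ (INR 2 * INR 2 * m)); [apply Rmult_le_pos; [simpl; lra|auto]| |].
  - apply (op_bound_of_norm_le_sum _ [A; B]); auto.
    + intros D [<-|[<-|[]]].
      * apply (op_bound_mono _ (opnorm p A)); [apply opnorm_nonneg|apply Rmax_l|apply op_bound_opnorm]; auto.
      * apply (op_bound_mono _ (opnorm p B)); [apply opnorm_nonneg|apply Rmax_r|apply op_bound_opnorm]; auto.
    + intros g x _. simpl. unfold osub, fsub. rewrite Rplus_0_r, <- (bnorm_opp E (B g x)).
      apply bnorm_triangle.
  - intros f g a Hf Hg x. unfold osub, fsub. destruct HA as [_ [HlA _]], HB as [_ [HlB _]].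
    rewrite HlA, HlB by auto. rewrite bsub_add_add, !bopp_scal, bscal_assoc.
    f_equal. rewrite bscal_distr_l, !bscal_assoc. f_equal. f_equal. ring.
Qed.

Lemma opnorm_osub_self (C : Op X E) : opnorm p (osub C C) <= 0.
Proof.
  apply opnorm_le_of_bound; [lra|]. intros g Hg.
  replace (osub C C g) with fzero
    by (extensionality x; unfold osub, fsub, fzero; symmetry; apply badd_opp).
  rewrite rpow_0, Rmult_0_l. apply sums_le_fzero.
Qed.

Lemma in_Ap_band (C : Op X E) : is_band p C -> in_Ap p C.
Proof.
  intros HC. split; [apply HC|]. intros eps He. exists C. split; auto.
  pose proof (opnorm_osub_self C). lra.
Qed.

End LpSpace.

Section Multiplier.
Variables (X : MetricSpace) (E : Banach) (p q : R).
Hypothesis hp : 1 < p.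
Hypothesis hq : / p + / q = 1.
Variables (I : Type) (phi : I -> X -> R).
Notation "0E" := (bzero E).
Notation "a +E b" := (badd E a b) (at level 50, left associativity).
Notation "c *E a" := (bscal E c a) (at level 40).
Notation nrm := (bnorm E).
Notation is_lp := (is_lp X E p).
Notation npow := (npow X E p).
Notation fzero := (fzero X E).

Definition cover_spec (x : X) (L : list I) : Prop :=
  NoDup L /\ (forall i, phi i x <> 0 -> In i L) /\ lsum L (fun i => rpow (phi i x) p) = 1.
Definition cover (x : X) : list I := epsilon (inhabits []) (cover_spec x).

Definition mult_term (A : Op X E) (f : X -> E) (x : X) (i : I) : E :=
  rpow (phi i x) (p / q) *E A (fmul X E (phi i) f) x.

Definition Mop_on (T : I -> Prop) (A : Op X E) : Op X E :=
  fun f x => bsum E (cover x) (fun i => if dec (T i) then mult_term A f x i else 0E).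

Definition Mop (A : Op X E) : Op X E := fun f x => bsum E (cover x) (mult_term A f x).

Lemma Mop_on_True (A : Op X E) : Mop_on (fun _ => True) A = Mop A.
Proof.
  extensionality f. extensionality x. apply gsum_ext_in. intros. rewrite dec_true; auto.
Qed.

Lemma exponent_pq : p / q = p - 1.
Proof. unfold Rdiv. replace (/ q) with (1 - / p) by lra. field. lra. Qed.

Hypothesis hpart : metric_p_partition X p phi.

Lemma phi_bounds i x : 0 <= phi i x <= 1.
Proof. apply hpart. Qed.

Lemma cover_correct x : cover_spec x (cover x).
Proof. unfold cover. apply epsilon_spec. apply hpart. Qed.

Lemma cover_nodup x : NoDup (cover x).
Proof. apply cover_correct. Qed.

Lemma cover_in x i : phi i x <> 0 -> In i (cover x).
Proof. apply cover_correct. Qed.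

Lemma cover_sum x : lsum (cover x) (fun i => rpow (phi i x) p) = 1.
Proof. apply cover_correct. Qed.

Lemma lsum_rpow_phi_le1 x K : NoDup K -> lsum K (fun i => rpow (phi i x) p) <= 1.
Proof.
  intros HK. rewrite <- (cover_sum x). apply lsum_le_cover; auto. apply cover_nodup.
  - intros i _ Hi. apply cover_in. intros e. rewrite e, rpow_0 in Hi. auto.
  - intros; apply rpow_nonneg.
Qed.

Lemma cover_weights_sum x : lsum (cover x) (fun i => rpow (phi i x) (p / q) * phi i x) = 1.
Proof.
  rewrite <- (cover_sum x). apply lsum_ext_in. intros i _.
  rewrite exponent_pq, (rpow_pred (phi i x) p); auto. apply phi_bounds.
Qed.

Lemma npow_fmul i f x : npow (fmul X E (phi i) f) x = rpow (phi i x) p * npow f x.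
Proof.
  unfold npow, fmul. rewrite bnorm_scal, Rabs_right by (apply Rle_ge, phi_bounds).
  apply rpow_mult. apply phi_bounds. apply bnorm_nonneg.
Qed.

Lemma npow_fmul_le i f x : npow (fmul X E (phi i) f) x <= npow f x.
Proof.
  rewrite npow_fmul. pose proof (rpow_le1 (phi i x) p (phi_bounds i x)).
  pose proof (npow_nonneg X E p f x). assert (rpow (phi i x) p <= 1) by (apply H; lra). nra.
Qed.

Lemma lp_fmul i f : is_lp f -> is_lp (fmul X E (phi i) f).
Proof.
  intros [B HB]%is_lp_sums_le. apply is_lp_sums_le. exists B.
  eapply sums_le_pointwise; eauto. intros; apply npow_fmul_le.
Qed.

Lemma npow_Mop_on_le (T : I -> Prop) (A : Op X E) f x :
  npow (Mop_on T A f) x <=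
  lsum (cover x) (fun i => if dec (T i) then npow (A (fmul X E (phi i) f)) x else 0).
Proof.
  set (w := fun i => if dec (T i) then phi i x else 0).
  set (a := fun i => if dec (T i) then nrm (A (fmul X E (phi i) f) x) else 0).
  assert (N1 : nrm (Mop_on T A f x) <= lsum (cover x) (fun i => rpow (w i) (p - 1) * a i)).
  { eapply Rle_trans. apply bnorm_bsum. apply lsum_le. intros i _.
    unfold w, a. destruct (dec (T i)).
    - unfold mult_term. rewrite bnorm_scal, exponent_pq, Rabs_right by (apply Rle_ge, rpow_nonneg). lra.
    - rewrite bnorm_0, rpow_0. lra. }
  unfold npow at 1. eapply Rle_trans; [apply rpow_le; [split; [apply bnorm_nonneg|exact N1]|lra]|].
  eapply Rle_trans. apply holder_weighted; auto.
  - intros i; unfold w. destruct (dec (T i)). apply phi_bounds. lra.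
  - intros i; unfold a. destruct (dec (T i)). apply bnorm_nonneg. lra.
  - eapply Rle_trans; [|apply (lsum_rpow_phi_le1 x (cover x) (cover_nodup x))].
    apply lsum_le. intros i _. unfold w. destruct (dec (T i)). lra. rewrite rpow_0. apply rpow_nonneg.
  - apply lsum_le. intros i _. unfold a. destruct (dec (T i)). unfold npow. lra. rewrite rpow_0. lra.
Qed.

Lemma Mop_on_bound (A : Op X E) c (T : I -> Prop) f (w : X -> R) Bw :
  0 <= c -> op_bound X E p A c -> is_lp f ->
  (forall x K, NoDup K ->
     lsum K (fun i => if dec (T i) then rpow (phi i x) p else 0) * npow f x <= w x) ->
  sums_le w Bw ->
  sums_le (npow (Mop_on T A f)) (rpow c p * Bw).
Proof.
  intros Hc HP Hf Hw HBw XL HXL.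
  set (b := fun x i => if dec (T i) then npow (A (fmul X E (phi i) f)) x else 0).
  assert (Hb0 : forall x i, 0 <= b x i).
  { intros. unfold b. destruct (dec (T i)). apply npow_nonneg. lra. }
  set (J := nodup classic_eq_dec (flat_map cover XL)).
  assert (NJ : NoDup J) by apply NoDup_nodup.
  assert (S1 : lsum XL (npow (Mop_on T A f)) <= lsum J (fun i => lsum XL (fun x => b x i))).
  { rewrite <- lsum_exchange. apply lsum_le. intros x Hx.
    eapply Rle_trans; [apply npow_Mop_on_le|]. apply lsum_le_sublist; auto. apply cover_nodup.
    intros i Hi. apply nodup_In. apply in_flat_map. eauto. }
  set (g := fun i x => if dec (T i) then npow (fmul X E (phi i) f) x else 0).
  assert (Hg0 : forall i x, 0 <= g i x).
  { intros. unfold g. destruct (dec (T i)). apply npow_nonneg. lra. }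
  pose proof Hf as [Bf HBf]%is_lp_sums_le.
  assert (Hgb : forall i, sums_le (g i) Bf).
  { intros i. eapply sums_le_pointwise; eauto. intros x.
    unfold g. destruct (dec (T i)). apply npow_fmul_le. apply npow_nonneg. }
  assert (S2 : forall i, lsum XL (fun x => b x i) <= rpow c p * sup_sums (g i)).
  { intros i. unfold b. destruct (dec (T i)) eqn:Ht.
    - replace (g i) with (npow (fmul X E (phi i) f))
        by (extensionality x; unfold g; rewrite Ht; auto).
      apply HP; auto. apply lp_fmul; auto.
    - rewrite lsum_eq_zero by auto. pose proof (rpow_nonneg c p).
      pose proof (sup_sums_nonneg (g i) Bf (Hgb i)). nra. }
  assert (S3 : lsum J (fun i => sup_sums (g i)) <= Bw).
  { apply sup_sums_superadditive; eauto.
    intros XL' HXL'. eapply Rle_trans; [|apply (HBw XL' HXL')]. apply lsum_le. intros x _.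
    eapply Rle_trans; [|apply (Hw x J NJ)].
    rewrite Rmult_comm, <- lsum_mult_l. apply lsum_le. intros i _.
    unfold g. destruct (dec (T i)). rewrite npow_fmul. lra. lra. }
  eapply Rle_trans. exact S1.
  eapply Rle_trans. apply lsum_le. intros i _. apply S2.
  rewrite lsum_mult_l. apply Rmult_le_compat_l. apply rpow_nonneg. auto.
Qed.

Lemma op_bound_Mop (A : Op X E) c : 0 <= c -> op_bound X E p A c -> op_bound X E p (Mop A) c.
Proof.
  intros Hc HP f Hf. rewrite <- Mop_on_True.
  apply (Mop_on_bound A c (fun _ => True) f (npow f)); auto.
  - intros x K HK. rewrite <- (Rmult_1_l (npow f x)) at 2. apply Rmult_le_compat_r. apply npow_nonneg.
    eapply Rle_trans; [|apply (lsum_rpow_phi_le1 x K HK)]. apply lsum_le. intros. rewrite dec_true; auto; lra.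
  - apply is_lp_sums_le in Hf as [B HB]. eapply sums_le_sup; eauto.
Qed.

Lemma Mop_linear (A : Op X E) : bounded_op p A ->
  forall f g a, is_lp f -> is_lp g ->
  forall x, Mop A (fadd X E f (fscal X E a g)) x = Mop A f x +E a *E Mop A g x.
Proof.
  intros [_ [HA _]] f g a Hf Hg x. unfold Mop. rewrite bscal_bsum, <- bsum_add.
  apply gsum_ext_in. intros i _. unfold mult_term.
  replace (fmul X E (phi i) (fadd X E f (fscal X E a g)))
    with (fadd X E (fmul X E (phi i) f) (fscal X E a (fmul X E (phi i) g))).
  - rewrite HA by (try apply lp_fscal; apply lp_fmul; auto). apply bscal_add_scal.
  - extensionality y. unfold fmul, fadd, fscal. rewrite bscal_distr_l, !bscal_assoc, Rmult_comm. auto.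
Qed.

Lemma Mop_linear_op (A B : Op X E) a f x :
  Mop (oadd A (oscal a B)) f x = Mop A f x +E a *E Mop B f x.
Proof.
  unfold Mop. rewrite bscal_bsum, <- bsum_add.
  apply gsum_ext_in. intros i _. unfold mult_term, oadd, oscal, fadd, fscal. apply bscal_add_scal.
Qed.

Lemma Mop_bounded (A : Op X E) : bounded_op p A -> bounded_op p (Mop A).
Proof.
  intros HA. pose proof (opnorm_nonneg X E p A HA).
  apply (bounded_op_of_bound X E p hp _ (opnorm p A)); auto.
  - apply op_bound_Mop, op_bound_opnorm; auto; lra.
  - apply Mop_linear; auto.
Qed.

(** The term [phi_i^(p/q) A phi_i] has propagation at most the diameter of the support of [phi_i]. *)
Lemma Mop_band (A : Op X E) : bounded_op p A -> is_band p (Mop A).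
Proof.
  intros HA. split; [apply Mop_bounded; auto|].
  destruct hpart as [_ [_ [[D HD] _]]]. exists D. intros x y e Hd.
  unfold entry, Mop. apply bsum_eq_zero. intros i _. unfold mult_term.
  destruct (Req_dec (phi i x) 0) as [H0|H0]; [rewrite H0, rpow_0; apply bscal_0l|].
  assert (Hy : phi i y = 0) by (apply NNPP; intros H1; specialize (HD i x y H0 H1); lra).
  replace (fmul X E (phi i) (delta X E y e)) with fzero.
  - rewrite (linear_fzero X E p A HA). apply bscal_0r.
  - extensionality z. unfold fmul, delta, fzero.
    destruct (excluded_middle_informative (z = y)); [subst; rewrite Hy, bscal_0l|rewrite bscal_0r]; auto.
Qed.

Lemma Mop_id : Mop (fun f => f) = (fun f => f).
Proof.
  extensionality f. extensionality x. unfold Mop, mult_term, fmul.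
  rewrite (gsum_ext_in _ _ _ _ _ (fun i => (rpow (phi i x) (p / q) * phi i x) *E f x))
    by (intros; apply bscal_assoc).
  rewrite <- lsum_bscal, cover_weights_sum. apply bscal_1.
Qed.

Lemma partial_M_eq (A : Op X E) L f x : NoDup L ->
  partial_M p q phi A L f x =
  bsum E (cover x) (fun i => if dec (In i L) then mult_term A f x i else 0E).
Proof.
  intros NL. transitivity (bsum E L (fun i => if dec (In i L) then mult_term A f x i else 0E)).
  - transitivity (bsum E L (mult_term A f x)).
    + clear NL. induction L as [|a L IH]; [reflexivity|].
      unfold partial_M in *. simpl. unfold fadd at 1. rewrite IH. reflexivity.
    + apply gsum_ext_in. intros j Hj. rewrite dec_true; auto.
  - apply bsum_reindex; auto. apply cover_nodup.
    intros j Hj. destruct (dec (In j L)) eqn:Hd; [|exfalso; apply Hj; reflexivity].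
    apply dec_true_inv in Hd. split; auto. intros _. apply cover_in. intros H0. apply Hj.
    unfold mult_term. rewrite H0, rpow_0. apply bscal_0l.
Qed.

Lemma Mop_split (A : Op X E) L f x :
  Mop A f x = bsum E (cover x) (fun i => if dec (In i L) then mult_term A f x i else 0E)
              +E Mop_on (fun i => ~ In i L) A f x.
Proof.
  unfold Mop, Mop_on. rewrite <- bsum_add. apply gsum_ext_in. intros i _.
  destruct (excluded_middle_informative (In i L)).
  - rewrite dec_true, dec_false by auto. rewrite badd_0r. auto.
  - rewrite dec_false, dec_true by auto. rewrite badd_0. auto.
Qed.

(** The partial sums over [L] miss only indices whose supports avoid a set [F] carrying
    almost all of [||f||_p^p]. *)
Lemma Mop_strong (A : Op X E) : bounded_op p A -> strong_sum p q phi A (Mop A).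
Proof.
  intros HA f Hf eps He.
  set (c := opnorm p A).
  assert (Hc : 0 <= c) by (apply opnorm_nonneg; auto).
  set (cp := rpow c p). assert (Hcp : 0 <= cp) by apply rpow_nonneg.
  set (ep := rpow eps p). assert (Hep : 0 < ep) by (apply rpow_gt0; auto).
  destruct (exists_small_factor cp ep Hcp Hep) as [e' [He' Hlt]].
  pose proof Hf as [Bf HBf]%is_lp_sums_le.
  destruct (sums_tail (npow f) Bf e' HBf He') as [F [NF HF]].
  exists (nodup classic_eq_dec (flat_map cover F)). split; [apply NoDup_nodup|].
  intros L NL Hincl.
  set (g := fsub X E (partial_M p q phi A L f) (Mop A f)).
  assert (Hg : npow g = npow (Mop_on (fun i => ~ In i L) A f)).
  { extensionality x. unfold g, npow, fsub.
    rewrite partial_M_eq, (Mop_split A L), bsub_add_r, bnorm_opp by auto. auto. }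
  assert (HB : sums_le (npow g) (cp * e')).
  { rewrite Hg. apply (Mop_on_bound A c _ f (fun x => if dec (In x F) then 0 else npow f x)); auto.
    - apply op_bound_opnorm; auto; lra.
    - intros x K HK. destruct (dec (In x F)) eqn:Hx.
      + apply dec_true_inv in Hx. rewrite lsum_eq_zero; [lra|]. intros i _.
        destruct (dec (~ In i L)) eqn:Hi; auto. apply dec_true_inv in Hi.
        destruct (Req_dec (phi i x) 0) as [H0|H0]; [rewrite H0; apply rpow_0|].
        exfalso. apply Hi, Hincl, nodup_In, in_flat_map. exists x. split; auto. apply cover_in; auto.
      + rewrite <- (Rmult_1_l (npow f x)) at 2. apply Rmult_le_compat_r. apply npow_nonneg.
        eapply Rle_trans; [|apply (lsum_rpow_phi_le1 x K HK)]. apply lsum_le. intros i _.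
        destruct (dec (~ In i L)); [lra|apply rpow_nonneg].
    - intros XL HXL. rewrite lsum_filter_out. apply HF. apply NoDup_filter; auto.
      intros y Hy. apply filter_In in Hy as [_ Hy]. intros Hy'. rewrite dec_true in Hy by auto.
      discriminate. }
  assert (HS : sup_sums (npow g) <= cp * e') by (eapply sup_sums_le; eauto).
  assert (HS0 : 0 <= sup_sums (npow g)) by (eapply sup_sums_nonneg; eauto).
  fold g. rewrite lp_norm_sup. rewrite <- (rpow_rpow_inv eps p) by lra.
  apply rpow_lt; [fold ep; lra|]. apply Rinv_0_lt_compat; lra.
Qed.

End Multiplier.

Section BandOperators.
Variables (X : MetricSpace) (E : Banach) (p : R).
Hypothesis hp : 1 < p.
Notation "0E" := (bzero E).
Notation "c *E a" := (bscal E c a) (at level 40).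
Notation nrm := (bnorm E).
Notation is_lp := (is_lp X E p).
Notation npow := (npow X E p).
Notation fzero := (fzero X E).

Lemma npow_op_le (B : Op X E) g x : bounded_op p B -> is_lp g ->
  npow (B g) x <= rpow (opnorm p B) p * sup_sums (npow g).
Proof.
  intros HB Hg. pose proof (op_bound_opnorm X E p hp B HB g Hg [x]) as H.
  simpl in H. rewrite Rplus_0_r in H. apply H. repeat constructor; auto.
Qed.

Lemma lp_of_finite_support (g : X -> E) F : NoDup F -> (forall y, ~ In y F -> g y = 0E) -> is_lp g.
Proof.
  intros NF Hg. apply is_lp_sums_le. exists (lsum F (npow g)). intros L HL.
  apply lsum_le_cover; auto; [|apply npow_nonneg].
  intros y _ Hy. apply NNPP. intros Hn. apply Hy.
  unfold npow. rewrite Hg, bnorm_0 by auto. apply rpow_0.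
Qed.

Lemma lp_delta y e : is_lp (delta X E y e).
Proof.
  apply (lp_of_finite_support _ [y]); [repeat constructor; auto|]. intros z Hz. unfold delta.
  destruct (excluded_middle_informative (z = y)); auto. subst. exfalso; apply Hz; left; auto.
Qed.

Lemma delta_zero y : delta X E y 0E = fzero.
Proof. extensionality z. unfold delta, fzero. destruct (excluded_middle_informative (z = y)); auto. Qed.

Lemma delta_scal y c e : delta X E y (c *E e) = fscal X E c (delta X E y e).
Proof.
  extensionality z. unfold delta, fscal. destruct (excluded_middle_informative (z = y)); auto.
  rewrite bscal_0r; auto.
Qed.

Lemma sup_sums_delta y e : sup_sums (npow (delta X E y e)) = rpow (nrm e) p.
Proof.
  assert (Hy : npow (delta X E y e) y = rpow (nrm e) p).
  { unfold npow, delta. destruct (excluded_middle_informative (y = y)); tauto. }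
  assert (HB : sums_le (npow (delta X E y e)) (rpow (nrm e) p)).
  { intros L HL. eapply Rle_trans; [apply (lsum_le_cover L [y]); auto|].
    - repeat constructor; auto.
    - intros z _ Hz. left. unfold npow, delta in Hz.
      destruct (excluded_middle_informative (z = y)); auto.
      exfalso; apply Hz. rewrite bnorm_0. apply rpow_0.
    - apply npow_nonneg.
    - simpl. lra. }
  apply Rle_antisym; [apply (sup_sums_le _ _ HB)|].
  pose proof (sup_sums_ge _ _ [y] HB) as H. simpl in H.
  rewrite Rplus_0_r, Hy in H. apply H. repeat constructor; auto.
Qed.

Lemma bnorm_entry_le (B : Op X E) y e x : bounded_op p B ->
  nrm (B (delta X E y e) x) <= opnorm p B * nrm e.
Proof.
  intros HB. pose proof (opnorm_nonneg X E p B HB) as Hc.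
  pose proof (npow_op_le B (delta X E y e) x HB (lp_delta y e)) as H.
  unfold npow at 1 in H. rewrite sup_sums_delta, <- rpow_mult in H by (auto; apply bnorm_nonneg).
  apply (rpow_le_inv _ _ p); [apply bnorm_nonneg| |lra|exact H].
  pose proof (bnorm_nonneg E e). nra.
Qed.

Lemma op_finite_support_eq (B : Op X E) F g x : bounded_op p B -> NoDup F ->
  (forall y, ~ In y F -> g y = 0E) ->
  B g x = bsum E F (fun y => B (delta X E y (g y)) x).
Proof.
  intros HB. revert g. induction F as [|a F IH]; intros g NF Hg.
  - replace g with fzero by (extensionality y; symmetry; apply Hg; auto).
    rewrite (linear_fzero X E p B HB). reflexivity.
  - inversion NF; subst.
    set (g' := fun y => if excluded_middle_informative (y = a) then 0E else g y).
    assert (Hg' : forall y, ~ In y F -> g' y = 0E).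
    { intros y Hy. unfold g'. destruct (excluded_middle_informative (y = a)); auto.
      apply Hg. intros [H|H]; auto. }
    assert (Eg : g = fadd X E (delta X E a (g a)) (fscal X E 1 g')).
    { extensionality y. unfold fadd, fscal, delta, g'.
      destruct (excluded_middle_informative (y = a)).
      - subst. rewrite bscal_0r, badd_0r; auto.
      - rewrite bscal_1, badd_0; auto. }
    destruct HB as [Hlp [Hlin Hbd]].
    rewrite Eg at 1. rewrite Hlin by (apply lp_delta || apply (lp_of_finite_support g' F); auto).
    rewrite bscal_1. simpl. f_equal. rewrite IH; auto. apply gsum_ext_in.
    intros y Hy. unfold g'. destruct (excluded_middle_informative (y = a)); auto.
    subst; contradiction.
Qed.

Section Propagation.
Variables (B : Op X E) (R0 : R).
Hypothesis HB : bounded_op p B.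
Hypothesis Hprop : forall x y e, R0 < Defs.dist X x y -> entry B x y e = 0E.

(** A finitely supported [kF] vanishing near [x] is killed at [x] entry by entry; the
    remainder [k - kF] is small in [l^p], hence so is its image at [x]. *)
Lemma band_local k x : is_lp k -> (forall y, Defs.dist X x y <= R0 -> k y = 0E) -> B k x = 0E.
Proof.
  intros Hk Hl. apply NNPP. intros Hv.
  set (v := B k x) in *.
  assert (Hnv : 0 < nrm v).
  { destruct (bnorm_nonneg E v) as [H|H]; auto. exfalso. apply Hv. apply bnorm_eq0; auto. }
  set (cp := rpow (opnorm p B) p). assert (Hcp : 0 <= cp) by apply rpow_nonneg.
  set (ev := rpow (nrm v) p). assert (Hev : 0 < ev) by (apply rpow_gt0; auto).
  destruct (exists_small_factor cp ev Hcp Hev) as [eps [He Hlt]].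
  pose proof Hk as [Bk HBk]%is_lp_sums_le.
  destruct (sums_tail (npow k) Bk eps HBk He) as [F [NF HF]].
  set (kF := fun y => if excluded_middle_informative (In y F) then k y else 0E).
  assert (HkF : forall y, ~ In y F -> kF y = 0E).
  { intros y Hy. unfold kF. destruct (excluded_middle_informative (In y F)); tauto. }
  assert (HlkF : is_lp kF) by (apply (lp_of_finite_support _ F); auto).
  assert (H0 : B kF x = 0E).
  { rewrite (op_finite_support_eq B F) by auto. apply bsum_eq_zero.
    intros y _. destruct (excluded_middle_informative (kF y = 0E)) as [e|e].
    - rewrite e, delta_zero, (linear_fzero X E p B HB). auto.
    - apply Hprop. destruct (Rle_lt_dec (Defs.dist X x y) R0); auto. exfalso.
      apply e. unfold kF. destruct (excluded_middle_informative (In y F)); auto. }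
  set (r := fadd X E k (fscal X E (-1) kF)).
  assert (Hr : forall y, npow r y = if dec (In y F) then 0 else npow k y).
  { intros y. unfold r, npow, fadd, fscal, kF.
    destruct (excluded_middle_informative (In y F)).
    - rewrite dec_true by auto. rewrite <- bopp_scal, badd_opp, bnorm_0. apply rpow_0.
    - rewrite dec_false by auto. rewrite bscal_0r, badd_0r. auto. }
  assert (HBr : sums_le (npow r) eps).
  { intros L HL. rewrite (lsum_ext_in L _ _ (fun y _ => Hr y)), lsum_filter_out.
    apply HF. apply NoDup_filter; auto. intros y Hy. apply filter_In in Hy as [_ Hy].
    intros Hy'. rewrite dec_true in Hy by auto. discriminate. }
  assert (Hlr : is_lp r) by (apply is_lp_sums_le; eauto).
  assert (HBrx : B r x = v).
  { destruct HB as [_ [Hlin _]]. unfold r. rewrite Hlin, H0, bscal_0r, badd_0r by auto. auto. }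
  pose proof (npow_op_le B r x HB Hlr) as HP. unfold npow at 1 in HP. rewrite HBrx in HP.
  assert (sup_sums (npow r) <= eps) by (eapply sup_sums_le; eauto).
  assert (cp * sup_sums (npow r) <= cp * eps) by (apply Rmult_le_compat_l; auto).
  fold cp ev in HP. lra.
Qed.

Lemma band_eval (F : list X) f x : is_lp f -> NoDup F ->
  (forall y, Defs.dist X x y <= R0 -> In y F) ->
  B f x = bsum E F (fun y => B (delta X E y (f y)) x).
Proof.
  intros Hf NF HF.
  set (fF := fun y => if excluded_middle_informative (In y F) then f y else 0E).
  set (fo := fun y => if excluded_middle_informative (In y F) then 0E else f y).
  assert (HfF : forall y, ~ In y F -> fF y = 0E).
  { intros y Hy. unfold fF. destruct (excluded_middle_informative _); tauto. }
  assert (Hfo : is_lp fo).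
  { apply (lp_of_norm_le X E p hp fo f); auto. intros y. unfold fo.
    destruct (excluded_middle_informative _); [rewrite bnorm_0; apply bnorm_nonneg|lra]. }
  assert (Ef : f = fadd X E fF (fscal X E 1 fo)).
  { extensionality y. unfold fadd, fscal, fF, fo. rewrite bscal_1.
    destruct (excluded_middle_informative _); symmetry; [apply badd_0r|apply badd_0]. }
  pose proof HB as [_ [Hlin _]].
  rewrite Ef at 1. rewrite Hlin by (auto; apply (lp_of_finite_support fF F); auto).
  rewrite (band_local fo x), bscal_0r, badd_0r; auto.
  - rewrite (op_finite_support_eq B F fF) by auto. apply gsum_ext_in. intros y Hy.
    unfold fF. destruct (excluded_middle_informative _); tauto.
  - intros y Hy. unfold fo. destruct (excluded_middle_informative _); auto.
    exfalso; auto.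
Qed.

End Propagation.

Lemma id_in_Ap : in_Ap p (fun f : X -> E => f).
Proof.
  assert (Hid : bounded_op p (fun f : X -> E => f)) by (split; [|split]; auto; exists 1; intros; lra).
  apply in_Ap_band; auto. split; auto. exists 0. intros x y e Hd. unfold entry, delta.
  destruct (excluded_middle_informative (x = y)); auto. subst.
  assert (Defs.dist X y y = 0) by (apply Defs.dist_eq0; auto). lra.
Qed.

Lemma opnorm_id : inhabited X -> (exists e : E, e <> 0E) -> opnorm p (fun f : X -> E => f) = 1.
Proof.
  intros [x0] [e He]. apply Rle_antisym.
  - apply (opnorm_le_of_bound X E p hp); [lra|]. intros g [B HB]%is_lp_sums_le.
    rewrite rpow_1l, Rmult_1_l. eapply sums_le_sup; eauto.
  - assert (Hne : 0 < nrm e).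
    { destruct (bnorm_nonneg E e) as [H|H]; auto. exfalso; apply He, bnorm_eq0; auto. }
    set (e' := (/ nrm e) *E e).
    assert (Hn1 : nrm e' = 1).
    { unfold e'. rewrite bnorm_scal, Rabs_right by (left; apply Rinv_0_lt_compat; auto). field. lra. }
    apply (opnorm_lub X E p _ (proj1 id_in_Ap)). exists (delta X E x0 e').
    rewrite lp_norm_sup, sup_sums_delta, Hn1, rpow_1l, rpow_1l. split; [apply lp_delta|split; lra].
Qed.

End BandOperators.

Section BallLists.
Variables (X : MetricSpace) (R0 : R) (K : nat).
Hypothesis Hgeo : forall x : X, exists L, (length L <= K)%nat /\
  forall y, Defs.dist X x y <= R0 -> In y L.

Definition ball_list (x : X) : list X :=
  nodup classic_eq_dec (epsilon (inhabits [])
    (fun L => (length L <= K)%nat /\ forall y, Defs.dist X x y <= R0 -> In y L)).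

Lemma ball_list_spec x : NoDup (ball_list x) /\ (length (ball_list x) <= K)%nat /\
  forall y, Defs.dist X x y <= R0 -> In y (ball_list x).
Proof.
  destruct (epsilon_spec (inhabits []) _ (Hgeo x)) as [H1 H2]. unfold ball_list.
  split; [apply NoDup_nodup|split].
  - eapply Nat.le_trans; [|exact H1]. apply NoDup_incl_length; [apply NoDup_nodup|].
    intros y Hy. apply nodup_In in Hy; auto.
  - intros y Hy. apply nodup_In. auto.
Qed.

(** Each point lies in at most [K] of the balls of radius [R0]. *)
Lemma ball_counting (g : X -> R) Bg XL : NoDup XL -> (forall y, 0 <= g y) -> sums_le g Bg ->
  lsum XL (fun x => lsum (ball_list x) (fun y => if dec (Defs.dist X x y <= R0) then g y else 0))
  <= INR K * sup_sums g.
Proof.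
  intros NXL Hg HBg.
  set (h := fun x y => if dec (Defs.dist X x y <= R0) then g y else 0).
  assert (Hh0 : forall x y, 0 <= h x y) by (intros; unfold h; destruct (dec _); auto; lra).
  set (Y := nodup classic_eq_dec (flat_map ball_list XL)).
  apply Rle_trans with (lsum Y (fun y => lsum XL (fun x => h x y))).
  { rewrite <- lsum_exchange. apply lsum_le. intros x Hx.
    apply lsum_le_sublist; auto; [apply ball_list_spec|apply NoDup_nodup|].
    intros y Hy. apply nodup_In, in_flat_map. eauto. }
  apply Rle_trans with (lsum Y (fun y => INR K * g y)).
  2:{ rewrite lsum_mult_l. apply Rmult_le_compat_l; [apply pos_INR|].
      eapply sup_sums_ge; eauto. apply NoDup_nodup. }
  apply lsum_le. intros y _. destruct (ball_list_spec y) as [NBy [LBy CBy]].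
  eapply Rle_trans; [apply (lsum_le_cover XL (ball_list y)); auto|].
  - intros x _ Hx. apply CBy. rewrite Defs.dist_sym. unfold h in Hx.
    destruct (dec _) eqn:Hd; [apply dec_true_inv in Hd; auto|lra].
  - apply Rle_trans with (lsum (ball_list y) (fun _ => g y)).
    + apply lsum_le. intros x _. unfold h. pose proof (Hg y). destruct (dec _); lra.
    + eapply Rle_trans; [apply lsum_le_length; intros; apply Rle_refl|].
      apply Rmult_le_compat_r; auto. apply le_INR; auto.
Qed.

End BallLists.

Section BandMultiplier.
Variables (X : MetricSpace) (E : Banach) (p q : R).
Hypothesis hp : 1 < p.
Hypothesis hq : / p + / q = 1.
Variables (I : Type) (phi : I -> X -> R).
Hypothesis hpart : metric_p_partition X p phi.
Notation "0E" := (bzero E).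
Notation "a +E b" := (badd E a b) (at level 50, left associativity).
Notation "-E a" := (bopp E a) (at level 35).
Notation "c *E a" := (bscal E c a) (at level 40).
Notation nrm := (bnorm E).
Notation is_lp := (is_lp X E p).
Notation npow := (npow X E p).
Notation M := (Mop X E p q I phi).
Notation cover := (cover X p I phi).

Definition mult_coef (x y : X) : R :=
  lsum (cover x) (fun i => rpow (phi i x) (p / q) * (phi i y - phi i x)).

Section Propagation.
Variables (B : Op X E) (R0 : R).
Hypothesis HB : bounded_op p B.
Hypothesis Hprop : forall x y e, R0 < Defs.dist X x y -> entry B x y e = 0E.

Lemma Mop_sub_band_expand (F : list X) f x : is_lp f -> NoDup F ->
  (forall y, Defs.dist X x y <= R0 -> In y F) ->
  M B f x +E -E B f x = bsum E F (fun y => mult_coef x y *E B (delta X E y (f y)) x).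
Proof.
  intros Hf NF HF. set (v := fun y => B (delta X E y (f y)) x).
  set (r := fun i => rpow (phi i x) (p / q)).
  assert (HBphi : forall i, B (fmul X E (phi i) f) x = bsum E F (fun y => phi i y *E v y)).
  { intros i. rewrite (band_eval X E p hp B R0 HB Hprop F); auto; [|apply lp_fmul; auto].
    apply gsum_ext_in. intros y _. unfold v, fmul.
    rewrite delta_scal, (linear_fscal X E p B) by (auto; apply lp_delta). reflexivity. }
  assert (HM : M B f x = bsum E F (fun y => lsum (cover x) (fun i => r i * phi i y) *E v y)).
  { unfold Mop, mult_term. fold r.
    rewrite (gsum_ext_in _ _ _ (cover x) _ (fun i => bsum E F (fun y => (r i * phi i y) *E v y))).
    - rewrite bsum_exchange. apply gsum_ext_in. intros y _. symmetry. apply lsum_bscal.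
    - intros i _. rewrite HBphi, bscal_bsum. apply gsum_ext_in. intros y _. apply bscal_assoc. }
  rewrite HM, (band_eval X E p hp B R0 HB Hprop F f x) by auto. fold v.
  rewrite bopp_scal, bscal_bsum, <- bsum_add. apply gsum_ext_in. intros y _.
  rewrite <- bscal_distr_r. f_equal. unfold mult_coef.
  rewrite (lsum_ext_in _ (fun i => rpow (phi i x) (p / q) * (phi i y - phi i x))
    (fun i => r i * phi i y + (-1) * (r i * phi i x))) by (intros; unfold r; ring).
  rewrite lsum_plus, lsum_mult_l. unfold r. rewrite (cover_weights_sum X p q hp hq I phi hpart). ring.
Qed.

Lemma mult_coef_bound r eps x y : has_variation X p phi r eps -> 0 <= eps ->
  Defs.dist X x y <= r -> Rabs (mult_coef x y) <= eps.
Proof.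
  intros Hvar Heps Hd. unfold mult_coef. eapply Rle_trans; [apply lsum_abs|].
  rewrite (lsum_ext_in _ _ (fun i => rpow (phi i x) (p - 1) * Rabs (phi i y - phi i x))).
  2:{ intros i _. rewrite Rabs_mult, Rabs_right, (exponent_pq p q hp hq); auto.
      apply Rle_ge, rpow_nonneg. }
  destruct (Hvar x y Hd) as [Lv [NLv [CLv SLv]]].
  apply Rlt_le, (rpow_lt_inv _ _ p); [|lra|lra|].
  { apply lsum_nonneg. intros i _. pose proof (rpow_nonneg (phi i x) (p - 1)).
    pose proof (Rabs_pos (phi i y - phi i x)). nra. }
  eapply Rle_lt_trans.
  { apply holder_weighted; auto; [intros; apply (phi_bounds X p I phi hpart)|intros; apply Rabs_pos|].
    apply (lsum_rpow_phi_le1 X p I phi hpart), cover_nodup; auto. }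
  rewrite (lsum_ext_in (cover x) _ (fun i => rpow (Rabs (phi i x - phi i y)) p))
    by (intros; rewrite Rabs_minus_sym; auto).
  eapply Rle_lt_trans; [|exact SLv]. apply lsum_le_cover; auto; [apply cover_nodup; auto| |].
  - intros i _ Hi. apply CLv. destruct (Req_dec (phi i x) 0) as [H0|H0]; auto.
    right. intros H1. apply Hi. rewrite H0, H1, Rminus_0_r, Rabs_R0. apply rpow_0.
  - intros; apply rpow_nonneg.
Qed.

Lemma npow_Mop_sub_band_le (F : list X) r eps f x : is_lp f -> NoDup F ->
  (forall y, Defs.dist X x y <= R0 -> In y F) ->
  R0 <= r -> has_variation X p phi r eps -> 0 <= eps ->
  npow (osub (M B) B f) x <=
  rpow (eps * opnorm p B) p * rpow (INR (length F)) p *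
  lsum F (fun y => if dec (Defs.dist X x y <= R0) then npow f y else 0).
Proof.
  intros Hf NF HF Hr Hvar Heps. set (c := opnorm p B).
  assert (Hc : 0 <= c) by (apply opnorm_nonneg; auto).
  set (a := fun y => if dec (Defs.dist X x y <= R0) then eps * c * nrm (f y) else 0).
  assert (Ha0 : forall y, 0 <= a y).
  { intros y. unfold a. destruct (dec _); [|lra].
    pose proof (bnorm_nonneg E (f y)). apply Rmult_le_pos; auto. apply Rmult_le_pos; auto. }
  assert (Hn : nrm (osub (M B) B f x) <= lsum F a).
  { unfold osub, fsub. rewrite (Mop_sub_band_expand F) by auto.
    eapply Rle_trans; [apply bnorm_bsum|]. apply lsum_le. intros y _.
    rewrite bnorm_scal. unfold a. destruct (dec _) eqn:Hd.
    - apply dec_true_inv in Hd. pose proof (Rabs_pos (mult_coef x y)).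
      pose proof (bnorm_entry_le X E p hp B y (f y) x HB) as HE. fold c in HE.
      pose proof (bnorm_nonneg E (B (delta X E y (f y)) x)).
      pose proof (mult_coef_bound r eps x y Hvar Heps ltac:(lra)).
      rewrite Rmult_assoc. apply Rmult_le_compat; auto.
    - replace (B (delta X E y (f y)) x) with 0E; [rewrite bnorm_0; lra|].
      symmetry. apply Hprop. apply Rnot_le_lt. intros H. rewrite dec_true in Hd; auto. discriminate. }
  unfold npow at 1.
  eapply Rle_trans; [apply rpow_le; [split; [apply bnorm_nonneg|exact Hn]|lra]|].
  eapply Rle_trans; [apply rpow_lsum_le; auto; lra|].
  rewrite (Rmult_comm (rpow (eps * c) p)), Rmult_assoc.
  apply Rmult_le_compat_l; [apply rpow_nonneg|].
  rewrite <- lsum_mult_l. apply lsum_le. intros y _. unfold a. destruct (dec _).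
  - rewrite rpow_mult by first [apply Rmult_le_pos; auto | apply bnorm_nonneg]. unfold npow. lra.
  - rewrite rpow_0. lra.
Qed.

Lemma op_bound_Mop_sub_band K r eps :
  (forall x, exists L, (length L <= K)%nat /\ forall y, Defs.dist X x y <= R0 -> In y L) ->
  R0 <= r -> has_variation X p phi r eps -> 0 <= eps ->
  op_bound X E p (osub (M B) B) (eps * opnorm p B * INR K * INR K).
Proof.
  intros Hgeo Hr Hvar Heps f Hf XL NXL. set (c := opnorm p B).
  assert (Hc : 0 <= c) by (apply opnorm_nonneg; auto).
  assert (HK : 0 <= INR K) by apply pos_INR.
  assert (HKp : INR K <= rpow (INR K) p).
  { destruct K; [simpl; apply rpow_nonneg|].
    apply rpow_ge_self; [rewrite S_INR; pose proof (pos_INR K)|]; lra. }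
  pose proof Hf as [Bf HBf]%is_lp_sums_le.
  assert (HS : 0 <= sup_sums (npow f)) by (eapply sup_sums_nonneg; eauto).
  apply Rle_trans with (rpow (eps * c) p * rpow (INR K) p *
    lsum XL (fun x => lsum (ball_list X R0 K x)
                         (fun y => if dec (Defs.dist X x y <= R0) then npow f y else 0))).
  { rewrite <- lsum_mult_l. apply lsum_le. intros x _.
    destruct (ball_list_spec X R0 K Hgeo x) as [NBl [LBl CBl]].
    eapply Rle_trans; [apply (npow_Mop_sub_band_le (ball_list X R0 K x) r eps); auto|].
    apply Rmult_le_compat_r; [apply lsum_nonneg; intros; destruct (dec _); [apply npow_nonneg|lra]|].
    apply Rmult_le_compat_l; [apply rpow_nonneg|]. apply rpow_le; [|lra].
    split; [apply pos_INR|apply le_INR; auto]. }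
  eapply Rle_trans.
  { apply Rmult_le_compat_l; [apply Rmult_le_pos; apply rpow_nonneg|].
    apply (ball_counting X R0 K Hgeo (npow f) Bf); auto. apply npow_nonneg. }
  rewrite (rpow_mult (eps * c * INR K)), (rpow_mult (eps * c)) by (auto; repeat apply Rmult_le_pos; auto).
  set (A := rpow (eps * c) p * rpow (INR K) p).
  assert (HA : 0 <= A) by (apply Rmult_le_pos; apply rpow_nonneg).
  replace (A * (INR K * sup_sums (npow f))) with (A * INR K * sup_sums (npow f)) by ring.
  apply Rmult_le_compat_r; auto. apply Rmult_le_compat_l; auto.
Qed.

End Propagation.

End BandMultiplier.

Lemma Mop_osub (X : MetricSpace) (E : Banach) p q I phi (A B : Op X E) f x :
  Mop X E p q I phi A f x =
  badd E (Mop X E p q I phi (osub A B) f x) (Mop X E p q I phi B f x).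
Proof.
  unfold Mop, mult_term. rewrite <- bsum_add. apply gsum_ext_in. intros i _.
  rewrite <- bscal_distr_l. unfold osub, fsub. rewrite bsub_add. auto.
Qed.

Section Convergence.
Variables (X : MetricSpace) (E : Banach) (p q : R).
Hypothesis hp : 1 < p.
Hypothesis hq : / p + / q = 1.
Variables (I : Type) (phi : I -> X -> R).
Hypothesis hpart : metric_p_partition X p phi.
Notation "a +E b" := (badd E a b) (at level 50, left associativity).
Notation "-E a" := (bopp E a) (at level 35).
Notation M := (Mop X E p q I phi).

Lemma opnorm_Mop_le (A : Op X E) : bounded_op p A -> opnorm p (M A) <= opnorm p A.
Proof.
  intros HA. pose proof (opnorm_nonneg X E p A HA).
  apply (opnorm_le_of_bound X E p hp); auto.
  apply (op_bound_Mop X E p q hp hq I phi hpart); auto. apply op_bound_opnorm; auto.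
Qed.

(** [M(A) - A = M(A - B) + (M(B) - B) - (A - B)] for a band operator [B] close to [A]. *)
Lemma opnorm_Mop_sub_le (A B : Op X E) R0 K r eps eta :
  bounded_op p A -> bounded_op p B ->
  (forall x y e, R0 < Defs.dist X x y -> entry B x y e = bzero E) ->
  (forall x, exists L, (length L <= K)%nat /\ forall y, Defs.dist X x y <= R0 -> In y L) ->
  R0 <= r -> has_variation X p phi r eps -> 0 <= eps ->
  opnorm p (osub A B) <= eta -> eps * opnorm p B * INR K * INR K <= eta ->
  opnorm p (osub (M A) A) <= 9 * eta.
Proof.
  intros HA HB Hprop Hgeo Hr Hvar Heps HAB HBn.
  set (C := osub A B).
  assert (HC : bounded_op p C) by (apply bounded_osub; auto).
  assert (Heta : 0 <= eta) by (eapply Rle_trans; [apply (opnorm_nonneg X E p C HC)|auto]).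
  assert (HbC : op_bound X E p C eta)
    by (apply (op_bound_mono X E p hp C (opnorm p C)); [apply opnorm_nonneg|auto|apply op_bound_opnorm]; auto).
  apply (opnorm_le_of_bound X E p hp); [lra|].
  replace (9 * eta) with (INR 3 * INR 3 * eta) by (simpl; ring).
  apply (op_bound_of_norm_le_sum X E p hp _ [M C; osub (M B) B; C]); auto.
  - intros D [<-|[<-|[<-|[]]]]; auto.
    + apply (op_bound_Mop X E p q hp hq I phi hpart); auto.
    + apply (op_bound_mono X E p hp _ (eps * opnorm p B * INR K * INR K)); auto.
      * repeat apply Rmult_le_pos; auto using opnorm_nonneg, pos_INR.
      * apply (op_bound_Mop_sub_band X E p q hp hq I phi hpart B R0 HB Hprop K r eps); auto.
  - intros g x _. simpl. rewrite Rplus_0_r.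
    unfold osub at 1 2, fsub. rewrite (Mop_osub X E p q I phi A B g x). fold C.
    replace (A g x) with (C g x +E B g x) by (unfold C, osub, fsub; apply bsub_add).
    rewrite bsub_add_add. eapply Rle_trans; [apply bnorm_triangle|].
    pose proof (bnorm_triangle E (M C g x) (-E C g x)) as H. rewrite bnorm_opp in H. lra.
Qed.

Lemma Mop_opnorm_lub : inhabited X -> (exists e : E, e <> bzero E) ->
  is_lub (fun s => exists A : Op X E, in_Ap p A /\ opnorm p A <= 1 /\ s = opnorm p (M A)) 1.
Proof.
  intros HX HE. split.
  - intros s [A [HA [H1 ->]]]. eapply Rle_trans; [apply opnorm_Mop_le, HA|exact H1].
  - intros b Hb. apply Hb. exists (fun f => f).
    rewrite (Mop_id X E p q hp hq I phi hpart), (opnorm_id X E p hp HX HE).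
    split; [apply id_in_Ap; auto|split; lra].
Qed.

End Convergence.

Lemma Mop_tends_to_id (X : MetricSpace) (E : Banach) (p q : R)
  (hX : is_space X) (hp : 1 < p) (hq : / p + / q = 1)
  (I : nat -> Type) (phi : forall n : nat, I n -> X -> R)
  (hphi : forall n : nat, (1 <= n)%nat ->
     metric_p_partition X p (phi n) /\ has_variation X p (phi n) (INR n) (/ INR n))
  (A : Op X E) : in_Ap p A ->
  forall eps, 0 < eps -> exists N : nat, forall n : nat, (N <= n)%nat ->
    opnorm p (osub (Mop X E p q (I n) (phi n) A) A) < eps.
Proof.
  intros [HA Happrox] eps He.
  set (eta := eps / 10). assert (Heta : 0 < eta) by (unfold eta; lra).
  destruct (Happrox eta Heta) as [B [[HB [R0 HR0]] HAB]].
  set (R1 := Rmax R0 1).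
  assert (HR0R1 : R0 <= R1) by apply Rmax_l.
  assert (HR1p : 0 < R1) by (unfold R1; pose proof (Rmax_r R0 1); lra).
  assert (HR1 : forall x y e, R1 < Defs.dist X x y -> entry B x y e = bzero E)
    by (intros; apply HR0; lra).
  destruct (proj2 hX R1 HR1p) as [K HK].
  set (cB := opnorm p B). assert (HcB : 0 <= cB) by (apply opnorm_nonneg; auto).
  destruct (INR_unbounded (Rmax R1 (cB * INR K * INR K / eta))) as [N0 HN0].
  exists (S N0). intros n Hn.
  assert (HnN : INR N0 < INR n) by (apply lt_INR; lia).
  assert (Hnpos : 0 < INR n) by (apply lt_0_INR; lia).
  assert (HnR1 : R1 <= INR n) by (pose proof (Rmax_l R1 (cB * INR K * INR K / eta)); lra).
  assert (HnB : cB * INR K * INR K / eta < INR n)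
    by (pose proof (Rmax_r R1 (cB * INR K * INR K / eta)); lra).
  assert (Hsmall : / INR n * cB * INR K * INR K <= eta).
  { assert (cB * INR K * INR K < INR n * eta).
    { replace (cB * INR K * INR K) with (cB * INR K * INR K / eta * eta) by (field; lra).
      apply Rmult_lt_compat_r; auto. }
    apply (Rmult_le_reg_l (INR n)); auto.
    replace (INR n * (/ INR n * cB * INR K * INR K)) with (cB * INR K * INR K) by (field; lra). lra. }
  destruct (hphi n ltac:(lia)) as [Hpart Hvar].
  apply Rle_lt_trans with (9 * eta); [|unfold eta; lra].
  apply (opnorm_Mop_sub_le X E p q hp hq (I n) (phi n) Hpart A B R1 K (INR n) (/ INR n) eta);
    auto; try lra. left; apply Rinv_0_lt_compat; auto.
Qed.

Theorem corollary6p5 (X : MetricSpace) (E : Banach) (p q : R)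
  (hX : is_space X) (hA : property_A X p)
  (hXne : inhabited (mcar X)) (hEne : exists e : E, e <> bzero E)
  (hp : 1 < p) (hq : / p + / q = 1)
  (I : nat -> Type) (phi : forall n : nat, I n -> X -> R)
  (hphi : forall n : nat, (1 <= n)%nat ->
     metric_p_partition X p (phi n) /\
     has_variation X p (phi n) (INR n) (/ INR n)) :
  exists M : nat -> Op X E -> Op X E,
    (forall n : nat, (1 <= n)%nat ->
       (forall A : Op X E, in_Ap p A -> strong_sum p q (phi n) A (M n A)) /\
       (forall A : Op X E, in_Ap p A -> in_Ap p (M n A)) /\
       (forall (A B : Op X E) (a : R), in_Ap p A -> in_Ap p B ->
          forall f, is_lp X E p f -> forall x,
            M n (oadd A (oscal a B)) f x
            = badd E (M n A f x) (bscal E a (M n B f x))) /\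
       is_lub (fun s => exists A : Op X E, in_Ap p A /\ opnorm p A <= 1 /\
                                  s = opnorm p (M n A)) 1) /\
    (forall A : Op X E, in_Ap p A ->
       forall eps, 0 < eps -> exists N : nat, forall n : nat, (N <= n)%nat ->
         opnorm p (osub (M n A) A) < eps).
Proof.
  exists (fun n => Mop X E p q (I n) (phi n)). split.
  - intros n Hn. destruct (hphi n Hn) as [Hpart _]. split; [|split; [|split]].
    + intros A HA. apply (Mop_strong X E p q hp hq (I n) (phi n) Hpart A (proj1 HA)).
    + intros A HA. apply in_Ap_band, (Mop_band X E p q hp hq (I n) (phi n) Hpart A (proj1 HA)); auto.
    + intros A B a _ _ f _ x. apply Mop_linear_op.
    + apply (Mop_opnorm_lub X E p q hp hq (I n) (phi n) Hpart hXne hEne).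
  - intros A HA. apply (Mop_tends_to_id X E p q hX hp hq I phi hphi A HA).
Qed.
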